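(* Let $D=(\alpha,\beta)_{\mathbb Q}$ be a quaternion division algebra and $p\neq2$ a prime with $v_p(\alpha)=v_p(\beta)=0$ and $\alpha$ a square in $\mathbb Q_p$. Identify $G_p$ with $\mathrm{SL}_2(\mathbb Q_p)$ via the isomorphism $x_1+x_2e_2+x_3e_3+x_4e_4\mapsto\begin{pmatrix}x_1+x_2\sqrt\alpha & \beta(x_3+x_4\sqrt\alpha)\\ x_3-x_4\sqrt\alpha & x_1-x_2\sqrt\alpha\end{pmatrix}$. Then the action of the norm-1 group $G$ of $D$ on the tree $\Delta_p$ of $\mathrm{SL}_2(\mathbb Q_p)$ is Weyl transitive.
   Context: $(\alpha,\beta)_{\mathbb Q}$ has basis $1,e_2,e_3,e_4$ with $e_2^2=\alpha$, $e_3^2=\beta$, $e_2e_3=-e_3e_2=e_4$ and norm $N(x)=x_1^2-\alpha x_2^2-\beta x_3^2+\alpha\beta x_4^2$; $D_p=D\otimes\mathbb Q_p$; $G$, $G_p$ are the norm-1 groups of $D$, $D_p$, and $G\subset G_p$. $\Delta_p$ is the Bruhat–Tits tree of $\mathrm{SL}_2(\mathbb Q_p)$ (vertices: homothety classes of $\mathbb Z_p$-lattices in $\mathbb Q_p^2$, adjacent if representatives satisfy $L\supset L'\supset pL$), a building whose chambers are edges, with infinite dihedral Weyl group $W$ and Weyl distance $\delta$. The action is Weyl transitive if for every $w\in W$, $G$ is transitive on pairs of chambers $(C,C')$ with $\delta(C,C')=w$. *)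

From HB Require Import structures.
From mathcomp Require Import all_boot all_order all_algebra.
Set Implicit Arguments.
Unset Strict Implicit.
Unset Printing Implicit Defensive.
Import Order.TTheory GRing.Theory Num.Theory.
Local Open Scope ring_scope.

Definition vp (p : nat) (q : rat) : int :=
  (logn p `|numq q|%N)%:Z - (logn p `|denq q|%N)%:Z.

(* The quaternion algebra (alpha,beta)_Q on the basis 1,e2,e3,e4 with  *)
(* e2^2 = alpha, e3^2 = beta, e2 e3 = - e3 e2 = e4.                    *)
Definition quat := (rat * rat * rat * rat)%type.

Definition qone : quat := (1, 0, 0, 0).
Definition qzero : quat := (0, 0, 0, 0).

Definition qmul (alpha beta : rat) (x y : quat) : quat :=
  let '(a1, a2, a3, a4) := x in
  let '(b1, b2, b3, b4) := y in
  (a1 * b1 + alpha * a2 * b2 + beta * a3 * b3 - alpha * beta * a4 * b4,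
   a1 * b2 + a2 * b1 - beta * a3 * b4 + beta * a4 * b3,
   a1 * b3 + a3 * b1 + alpha * a2 * b4 - alpha * a4 * b2,
   a1 * b4 + a4 * b1 + a2 * b3 - a3 * b2).

Definition qnorm (alpha beta : rat) (x : quat) : rat :=
  let '(x1, x2, x3, x4) := x in
  x1 ^+ 2 - alpha * x2 ^+ 2 - beta * x3 ^+ 2 + alpha * beta * x4 ^+ 2.

Definition is_division_algebra (alpha beta : rat) : Prop :=
  forall x : quat, x <> qzero ->
    exists y : quat, qmul alpha beta x y = qone /\ qmul alpha beta y x = qone.

Definition normone (alpha beta : rat) (x : quat) : Prop := qnorm alpha beta x = 1.

(* Q_p, characterised up to unique isomorphism: a field K with an       *)
(* embedding iota of Q and a discrete valuation v (on K^x) extending     *)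
(* v_p, such that Q is dense in K and K is complete.                    *)
Section Padic.
Variable p : nat.
Variable K : fieldType.
Variable iota : {rmorphism rat -> K}.
Variable v : K -> int.

Definition close (n : int) (x y : K) : Prop := x = y \/ n <= v (x - y).

Definition is_Qp : Prop :=
  [/\ (forall x y : K, x != 0 -> y != 0 -> v (x * y) = v x + v y),
      (forall x y : K, x != 0 -> y != 0 -> x + y != 0 ->
                       Num.min (v x) (v y) <= v (x + y)),
      (forall q : rat, q != 0 -> v (iota q) = vp p q),
      (forall (x : K) (n : int), exists q : rat, close n x (iota q)) &
      (forall u : nat -> K,
         (forall n : int, exists N : nat, forall m k : nat,
            (N <= m)%N -> (N <= k)%N -> close n (u m) (u k)) ->
         exists l : K, forall n : int, exists N : nat, forall m : nat,
            (N <= m)%N -> close n (u m) l)].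

Definition Zp (x : K) : Prop := x = 0 \/ 0 <= v x.

Definition vec := 'cV[K]_2.
Definition lat := vec -> Prop.

Definition lat_basis (B : 'M[K]_2) (L : lat) : Prop :=
  B \in unitmx /\
  forall y : vec, L y <-> exists c : vec, (forall i, Zp (c i 0)) /\ y = B *m c.

Definition is_lattice (L : lat) : Prop := exists B, lat_basis B L.

Definition lscale (l : K) (L : lat) : lat := fun y => exists z, L z /\ y = l *: z.

Definition homot (L M : lat) : Prop :=
  exists l : K, l != 0 /\ forall y, M y <-> lscale l L y.

Definition lsub (L M : lat) : Prop := forall y, L y -> M y.
Definition lssub (L M : lat) : Prop := lsub L M /\ ~ lsub M L.

(* adjacency in the Bruhat-Tits tree: representatives L ⊋ L' ⊋ pL *)
Definition adj (L M : lat) : Prop :=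
  is_lattice L /\ is_lattice M /\
  exists L' M', homot L L' /\ homot M M' /\
    lssub M' L' /\ lssub (lscale (p%:R) L') M'.

Definition vtype (L : lat) (i : bool) : Prop :=
  exists B, lat_basis B L /\ odd `|v (\det B)|%N = i.

(* chambers = edges = (unordered) pairs of adjacent vertices *)
Definition chamber := (lat * lat)%type.
Definition is_chamber (C : chamber) : Prop := adj C.1 C.2.
Definition ceq (C D : chamber) : Prop :=
  (homot C.1 D.1 /\ homot C.2 D.2) \/ (homot C.1 D.2 /\ homot C.2 D.1).

Definition iadj (i : bool) (C D : chamber) : Prop :=
  is_chamber C /\ is_chamber D /\ ~ ceq C D /\
  exists X Y, (X = C.1 \/ X = C.2) /\ (Y = D.1 \/ Y = D.2) /\
              homot X Y /\ vtype X i.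

Fixpoint gallery (C : chamber) (ws : seq (bool * chamber)) (C' : chamber) : Prop :=
  match ws with
  | [::] => ceq C C'
  | (i, D) :: ws' => iadj i C D /\ gallery D ws' C'
  end.

(* Weyl distance: W = infinite dihedral group <s0,s1>, whose elements are
   represented by their unique reduced words (alternating seq bool);
   delta C C' = w iff w is the type of a minimal gallery from C to C'. *)
Definition weyl_dist (C C' : chamber) (w : seq bool) : Prop :=
  exists ws, gallery C ws C' /\ map fst ws = w /\
    forall ws', gallery C ws' C' -> (size ws <= size ws')%N.

Definition lact (g : 'M[K]_2) (L : lat) : lat := fun y => exists z, L z /\ y = g *m z.
Definition cact (g : 'M[K]_2) (C : chamber) : chamber := (lact g C.1, lact g C.2).

(* The identification D_p -> M_2(Q_p) with a chosen sqrt(alpha) = s *)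
Definition qmx (alpha beta : rat) (s : K) (x : quat) : 'M[K]_2 :=
  let '(x1, x2, x3, x4) := x in
  \matrix_(i < 2, j < 2)
    if (i == 0 :> nat) then
      (if (j == 0 :> nat) then iota x1 + iota x2 * s
       else iota beta * (iota x3 + iota x4 * s))
    else
      (if (j == 0 :> nat) then iota x3 - iota x4 * s
       else iota x1 - iota x2 * s).

Definition weyl_transitive (alpha beta : rat) (s : K) : Prop :=
  forall (w : seq bool) (C1 C1' C2 C2' : chamber),
    is_chamber C1 -> is_chamber C1' -> is_chamber C2 -> is_chamber C2' ->
    weyl_dist C1 C1' w -> weyl_dist C2 C2' w ->
    exists x : quat, normone alpha beta x /\
      ceq (cact (qmx alpha beta s x) C1) C2 /\
      ceq (cact (qmx alpha beta s x) C1') C2'.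

End Padic.

(* SL_2(Q_p) acts Weyl-transitively on its tree: every chamber is an SL_2-translate
   of the standard chamber, and a minimal gallery, whose types alternate, is pushed
   into the standard apartment one chamber at a time by unipotent elements fixing
   the part already built.  Hence two pairs of chambers at the same Weyl distance
   are conjugate under SL_2(Q_p).  The norm-one group G is dense in SL_2(Q_p): if
   det g = 1 and tr g <> -2 then (1 + g)^2 = (2 + tr g) g by Cayley-Hamilton, so
   g = Y^2 / det Y for Y = 1 + g, and approximating Y by the image of a rational
   quaternion y gives y^2 / N(y) in G close to g; -g acts on the tree as g does.
   Stabilisers of lattices being open, an element of G close enough to the element
   of SL_2(Q_p) moving one pair to the other does the same. *)

From Pilot Require Import Defs.
From HB Require Import structures.
From mathcomp Require Import all_boot all_order all_algebra.
From mathcomp Require Import ring zify.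
From Stdlib Require Import Classical.
Set Implicit Arguments.
Unset Strict Implicit.
Unset Printing Implicit Defensive.
Import Order.TTheory GRing.Theory Num.Theory.
Local Open Scope ring_scope.

Section Mx2.
Variable R : comPzRingType.

Definition mx2 (a b c d : R) : 'M[R]_2 :=
  \matrix_(i < 2, j < 2)
    if (i == 0 :> nat) then (if (j == 0 :> nat) then a else b)
    else (if (j == 0 :> nat) then c else d).
Definition col2 (a b : R) : 'cV[R]_2 :=
  \matrix_(i < 2, j < 1) if (i == 0 :> nat) then a else b.

Lemma ord2P (i : 'I_2) : i = 0 \/ i = 1.
Proof. case: i => [[|[|i]] Hi]; [left|right|by []]; exact: val_inj. Qed.
Lemma ord1P (i : 'I_1) : i = 0.
Proof. case: i => [[|i] Hi] //; exact: val_inj. Qed.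

Lemma mx2E (A : 'M[R]_2) : A = mx2 (A 0 0) (A 0 1) (A 1 0) (A 1 1).
Proof.
apply/matrixP => i j; rewrite mxE.
by case: (ord2P i) => ->; case: (ord2P j) => ->.
Qed.
Lemma col2E (y : 'cV[R]_2) : y = col2 (y 0 0) (y 1 0).
Proof.
apply/matrixP => i j; rewrite mxE (ord1P j).
by case: (ord2P i) => ->.
Qed.
Lemma mx2_00 a b c d : mx2 a b c d 0 0 = a. Proof. by rewrite mxE. Qed.
Lemma mx2_01 a b c d : mx2 a b c d 0 1 = b. Proof. by rewrite mxE. Qed.
Lemma mx2_10 a b c d : mx2 a b c d 1 0 = c. Proof. by rewrite mxE. Qed.
Lemma mx2_11 a b c d : mx2 a b c d 1 1 = d. Proof. by rewrite mxE. Qed.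
Lemma col2_0 a b : col2 a b 0 0 = a. Proof. by rewrite mxE. Qed.
Lemma col2_1 a b : col2 a b 1 0 = b. Proof. by rewrite mxE. Qed.
Lemma col2_ext (y z : 'cV[R]_2) : y 0 0 = z 0 0 -> y 1 0 = z 1 0 -> y = z.
Proof. by move=> h0 h1; rewrite [y]col2E [z]col2E h0 h1. Qed.
Definition mx2_coef := (mx2_00, mx2_01, mx2_10, mx2_11, col2_0, col2_1).

Lemma mx2_mul a b c d a' b' c' d' :
  mx2 a b c d *m mx2 a' b' c' d' =
  mx2 (a * a' + b * c') (a * b' + b * d') (c * a' + d * c') (c * b' + d * d').
Proof.
apply/matrixP => i j; rewrite !mxE !big_ord_recl big_ord0 !mxE /=.
by case: (ord2P i) => ->; case: (ord2P j) => -> /=; rewrite addr0.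
Qed.
Lemma mx2_mulcol a b c d x y :
  mx2 a b c d *m col2 x y = col2 (a * x + b * y) (c * x + d * y).
Proof.
apply/matrixP => i j; rewrite !mxE !big_ord_recl big_ord0 !mxE /=.
by case: (ord2P i) => -> /=; rewrite addr0.
Qed.
Lemma mx2_scale l a b c d : l *: mx2 a b c d = mx2 (l * a) (l * b) (l * c) (l * d).
Proof.
apply/matrixP => i j; rewrite !mxE.
by case: (ord2P i) => ->; case: (ord2P j) => ->.
Qed.
Lemma col2_scale l a b : l *: col2 a b = col2 (l * a) (l * b).
Proof. apply/matrixP => i j; rewrite !mxE. by case: (ord2P i) => ->. Qed.
Lemma col2_add a b a' b' : col2 a b + col2 a' b' = col2 (a + a') (b + b').
Proof. apply/matrixP => i j; rewrite !mxE. by case: (ord2P i) => ->. Qed.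
Lemma mx2_add a b c d a' b' c' d' :
  mx2 a b c d + mx2 a' b' c' d' = mx2 (a + a') (b + b') (c + c') (d + d').
Proof.
apply/matrixP => i j; rewrite !mxE.
by case: (ord2P i) => ->; case: (ord2P j) => ->.
Qed.
Lemma mx2_one : (1 : 'M[R]_2) = mx2 1 0 0 1.
Proof.
apply/matrixP => i j; rewrite !mxE.
by case: (ord2P i) => ->; case: (ord2P j) => ->.
Qed.
Lemma mx2_det a b c d : \det (mx2 a b c d) = a * d - b * c.
Proof.
rewrite (expand_det_row _ 0) !big_ord_recl big_ord0 /cofactor !det_mx11 !mxE /=.
rewrite /bump /= add0n expr0 expr1. ring.
Qed.
Lemma mx2_CayleyHamilton a b c d : a * d - b * c = 1 ->
  mx2 (1 + a) b c (1 + d) *m mx2 (1 + a) b c (1 + d) = (2 + a + d) *: mx2 a b c d.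
Proof.
move=> h; have e : b * c = a * d - 1 by rewrite -h; ring.
rewrite mx2_mul mx2_scale; congr mx2; try ring.
  by rewrite e; ring.
by rewrite [c * b]mulrC e; ring.
Qed.

End Mx2.

Lemma sqr_perturb (R : pzRingType) n (y F g : 'M[R]_n) (t d : R) : y *m y = t *: g ->
  (y + F) *m (y + F) - (t + d) *: g = y *m F + F *m y + F *m F - d *: g.
Proof.
have cancel5 (G A B C H : 'M[R]_n) : G + A + (B + C) - (G + H) = A + B + C - H.
  rewrite opprD (addrC G A) -!addrA; congr (A + _); rewrite !addrA; congr (_ + _).
  by rewrite -(addrA G B C) addrC addKr.
by move=> yy; rewrite !mulmxDl !mulmxDr yy scalerDl cancel5.
Qed.

Lemma mx2_unit (K : fieldType) (a b c d : K) :
  (mx2 a b c d \in unitmx) = (a * d - b * c != 0).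
Proof. by rewrite unitmxE mx2_det unitfE. Qed.

Definition qscale (c : rat) (x : quat) : quat :=
  let '(x1, x2, x3, x4) := x in (c * x1, c * x2, c * x3, c * x4).

Lemma qnorm_scale_sqr (alpha beta c : rat) (y : quat) :
  qnorm alpha beta (qscale c (qmul alpha beta y y)) = (c * qnorm alpha beta y) ^+ 2.
Proof. case: y => [[[a1 a2] a3] a4]; rewrite /qscale /qmul /qnorm; ring. Qed.

Section Quaternion.
Variables (K : fieldType) (iota : {rmorphism rat -> K}) (alpha beta : rat) (s : K).
Hypothesis s_sqr : s * s = iota alpha.

Lemma qmxE (x1 x2 x3 x4 : rat) : qmx iota alpha beta s (x1, x2, x3, x4) =
  mx2 (iota x1 + iota x2 * s) (iota beta * (iota x3 + iota x4 * s))
      (iota x3 - iota x4 * s) (iota x1 - iota x2 * s).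
Proof. by []. Qed.

Lemma qmx_mul x y : qmx iota alpha beta s (qmul alpha beta x y) =
  qmx iota alpha beta s x *m qmx iota alpha beta s y.
Proof.
case: x => [[[a1 a2] a3] a4]; case: y => [[[b1 b2] b3] b4].
have -> : qmul alpha beta (a1, a2, a3, a4) (b1, b2, b3, b4) =
  (a1 * b1 + alpha * a2 * b2 + beta * a3 * b3 - alpha * beta * a4 * b4,
   a1 * b2 + a2 * b1 - beta * a3 * b4 + beta * a4 * b3,
   a1 * b3 + a3 * b1 + alpha * a2 * b4 - alpha * a4 * b2,
   a1 * b4 + a4 * b1 + a2 * b3 - a3 * b2) by [].
rewrite !qmxE mx2_mul; congr mx2; rewrite !(rmorphD, rmorphB, rmorphN, rmorphM) -s_sqr; ring.
Qed.
Lemma qmx_det x : \det (qmx iota alpha beta s x) = iota (qnorm alpha beta x).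
Proof.
case: x => [[[a1 a2] a3] a4]; rewrite qmxE mx2_det /qnorm.
rewrite !(rmorphD, rmorphB, rmorphN, rmorphM, rmorphXn) -s_sqr; ring.
Qed.
Lemma qmx_scale c x : qmx iota alpha beta s (qscale c x) = iota c *: qmx iota alpha beta s x.
Proof.
case: x => [[[a1 a2] a3] a4].
have -> : qscale c (a1, a2, a3, a4) = (c * a1, c * a2, c * a3, c * a4) by [].
rewrite !qmxE mx2_scale; congr mx2;
  rewrite !(rmorphD, rmorphB, rmorphM); ring.
Qed.
End Quaternion.

Section DiscreteValuation.
Variables (K : fieldType) (v : K -> int).
Hypothesis v_mul : forall x y : K, x != 0 -> y != 0 -> v (x * y) = v x + v y.
Hypothesis v_min : forall x y : K, x != 0 -> y != 0 -> x + y != 0 ->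
  Num.min (v x) (v y) <= v (x + y).

Lemma v_add_ge n x y : x != 0 -> y != 0 -> x + y != 0 -> n <= v x -> n <= v y -> n <= v (x + y).
Proof.
move=> nx ny nxy hx hy; apply: le_trans (v_min nx ny nxy).
by rewrite /Num.min; case: ifP.
Qed.
Lemma v1 : v 1 = 0.
Proof.
have h : v 1 = v 1 + v 1 by rewrite -v_mul ?oner_neq0 // mulr1.
lia.
Qed.
Lemma vN1 : v (-1) = 0.
Proof.
have n1 : (-1 : K) != 0 by rewrite oppr_eq0 oner_neq0.
have h : v 1 = v (-1) + v (-1) by rewrite -v_mul // mulrNN mulr1.
rewrite v1 in h. lia.
Qed.
Lemma vN x : v (- x) = v x.
Proof.
have [->|x0] := eqVneq x 0; first by rewrite oppr0.
by rewrite -mulN1r v_mul ?oppr_eq0 ?oner_neq0 // vN1 add0r.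
Qed.
Lemma vV x : x != 0 -> v x^-1 = - v x.
Proof.
move=> x0; have h : v 1 = v x + v x^-1 by rewrite -v_mul ?invr_neq0 // mulfV.
rewrite v1 in h. lia.
Qed.

(* [vge n x] says x \in p^n Z_p; the disjunct is needed because [v 0] is junk. *)
Definition vge (n : int) (x : K) := x = 0 \/ n <= v x.
Lemma vge_le m n x : m <= n -> vge n x -> vge m x.
Proof. by move=> mn [->|h]; [left|right; apply: le_trans h]. Qed.
Lemma vgeD n x y : vge n x -> vge n y -> vge n (x + y).
Proof.
have [->|x0] := eqVneq x 0; first by rewrite add0r.
have [->|y0] := eqVneq y 0; first by rewrite addr0.
move=> [/eqP|hx]; first by rewrite (negbTE x0).
move=> [/eqP|hy]; first by rewrite (negbTE y0).
have [->|nxy] := eqVneq (x + y) 0; first by left.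
by right; apply: v_add_ge.
Qed.
Lemma vgeN n x : vge n x -> vge n (- x).
Proof. by move=> [->|h]; [left; rewrite oppr0|right; rewrite vN]. Qed.
Lemma vgeB n x y : vge n x -> vge n y -> vge n (x - y).
Proof. by move=> hx hy; apply: vgeD => //; apply: vgeN. Qed.
Lemma vgeM a b x y : vge a x -> vge b y -> vge (a + b) (x * y).
Proof.
move=> [->|hx]; first by rewrite mul0r; left.
move=> [->|hy]; first by rewrite mulr0; left.
have [x0|x0] := eqVneq x 0; first by rewrite x0 mul0r; left.
have [y0|y0] := eqVneq y 0; first by rewrite y0 mulr0; left.
by right; rewrite v_mul // lerD.
Qed.
Lemma vge0M x y : vge 0 x -> vge 0 y -> vge 0 (x * y).
Proof. by move=> hx hy; have := vgeM hx hy; rewrite addr0. Qed.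
Lemma vge_v x : vge (v x) x.
Proof. by right. Qed.
Lemma vge_exists x m : exists n, n <= m /\ vge n x.
Proof.
have [->|x0] := eqVneq x 0; first by exists m; split => //; left.
exists (Num.min m (v x)); split; first by rewrite ge_min lexx.
by right; rewrite ge_min lexx orbT.
Qed.
Lemma vge0_divunit x : x != 0 -> v x = 0 -> forall y, vge 0 (y / x) <-> vge 0 y.
Proof.
move=> x0 vx y; have [->|y0] := eqVneq y 0; first by rewrite mul0r; split => _; left.
have e : v (y / x) = v y by rewrite v_mul ?invr_neq0 // vV // vx oppr0 addr0.
have yx0 : y / x != 0 by rewrite mulf_neq0 ?invr_neq0.
rewrite /vge e; split => -[/eqP h|h]; try by right.
- by rewrite h in yx0.
- by rewrite h in y0.
Qed.
Lemma vge01 : vge 0 (1 : K). Proof. by right; rewrite v1. Qed.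
Lemma vge0N1 : vge 0 (-1 : K). Proof. by right; rewrite vN1. Qed.
Lemma vge0V x : x != 0 -> v x = 0 -> vge 0 x^-1.
Proof. by move=> x0 vx; right; rewrite vV // vx oppr0. Qed.

Lemma vgeV x : x != 0 -> vge (- v x) x^-1.
Proof. by move=> x0; right; rewrite vV. Qed.
Lemma v_add_small x e m : x != 0 -> vge m e -> v x < m -> x + e != 0 /\ v (x + e) = v x.
Proof.
move=> x0 [->|he] hm; first by rewrite addr0.
have [e0|e0] := eqVneq e 0; first by rewrite e0 addr0.
have xe0 : x + e != 0.
  apply/eqP => h; have ex : e = - x by apply: (addrI x); rewrite h subrr.
  move: he; rewrite ex vN; lia.
split => //; apply/eqP; rewrite eq_le; apply/andP; split; last first.
  by apply: v_add_ge => //; lia.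
rewrite leNgt; apply/negP => hlt.
have : v x + 1 <= v ((x + e) + - e).
  by apply: v_add_ge; rewrite ?oppr_eq0 ?addrK ?vN //; lia.
rewrite addrK; lia.
Qed.
Lemma close_vge n x y : close v n x y -> vge n (y - x).
Proof.
case=> [->|h]; first by rewrite subrr; left.
by right; rewrite -opprB vN.
Qed.

Variable p : nat.
Local Notation P := (p%:R : K).
Hypothesis P_neq0 : P != 0.
Hypothesis vP : v P = 1.

Lemma vge1P x : vge 1 x <-> exists y, vge 0 y /\ x = P * y.
Proof.
split.
  move=> h; exists (x / P); split; last by rewrite mulrC divfK ?P_neq0.
  case: h => [->|h]; first by rewrite mul0r; left.
  have [->|x0] := eqVneq x 0; first by rewrite mul0r; left.
  by right; rewrite v_mul ?invr_neq0 ?P_neq0 // vV ?P_neq0 // vP subr_ge0.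
move=> [y [hy ->]]. have := vgeM (vge_v P) hy. by rewrite vP addr0.
Qed.
Lemma vge0P : vge 0 P. Proof. by right; rewrite vP. Qed.
Lemma vge1_P : vge 1 P. Proof. by right; rewrite vP. Qed.
Lemma vge0_unit x : vge 0 x -> ~ vge 1 x -> x != 0 /\ v x = 0.
Proof.
move=> [->|h] h1; first by exfalso; apply: h1; left.
have x0 : x != 0 by apply/eqP => x0; apply: h1; left.
split => //; have h2 : ~ (1 <= v x) by move=> H; apply: h1; right.
lia.
Qed.

(** * Lattices of K^2 and the Bruhat-Tits tree *)

Implicit Types (L M N : lat K) (g B W : 'M[K]_2) (C D E : chamber K).

Definition lat_of (B : 'M[K]_2) : lat K :=
  fun y => exists c : 'cV[K]_2, (forall i, Defs.Zp v (c i 0)) /\ y = B *m c.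
Definition lat_eq (L M : lat K) := forall y, L y <-> M y.

Lemma Zp_col2 a b : (forall i, Defs.Zp v (col2 a b i 0)) <-> vge 0 a /\ vge 0 b.
Proof.
split; first by move=> h; split; [have := h 0|have := h 1]; rewrite mx2_coef.
by move=> [ha hb] i; case: (ord2P i) => ->; rewrite mx2_coef.
Qed.
Lemma lat_ofP B y : lat_of B y <-> exists a b, vge 0 a /\ vge 0 b /\ y = B *m col2 a b.
Proof.
split.
  move=> [c [hc ->]]; exists (c 0 0), (c 1 0); rewrite -col2E; split; [|split] => //.
  - exact: hc.
  - exact: hc.
by move=> [a [b [ha [hb ->]]]]; exists (col2 a b); split => //; apply/Zp_col2.
Qed.

Lemma lat_eq_refl L : lat_eq L L. Proof. by []. Qed.
Lemma lat_eq_sym L M : lat_eq L M -> lat_eq M L. Proof. by move=> h y; split => /h. Qed.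
Lemma lat_eq_trans L M N : lat_eq L M -> lat_eq M N -> lat_eq L N.
Proof. by move=> h1 h2 y; rewrite h1 h2. Qed.

Lemma lact_eq g L M : lat_eq L M -> lat_eq (lact g L) (lact g M).
Proof. by move=> h y; split => -[z [/h hz ->]]; exists z. Qed.
Lemma lscale_eq l L M : lat_eq L M -> lat_eq (lscale l L) (lscale l M).
Proof. by move=> h y; split => -[z [/h hz ->]]; exists z. Qed.
Lemma lact_lat_of g B : lat_eq (lact g (lat_of B)) (lat_of (g *m B)).
Proof.
move=> y; split.
  by move=> [z [[c [hc ->]] ->]]; exists c; rewrite mulmxA.
by move=> [c [hc ->]]; exists (B *m c); split; [exists c|rewrite mulmxA].
Qed.
Lemma lscale_lat_of l B : lat_eq (lscale l (lat_of B)) (lat_of (l *: B)).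
Proof.
move=> y; split.
  by move=> [z [[c [hc ->]] ->]]; exists c; rewrite scalemxAl.
by move=> [c [hc ->]]; exists (B *m c); split; [exists c|rewrite scalemxAl].
Qed.
Lemma lact_comp g h L : lat_eq (lact g (lact h L)) (lact (g *m h) L).
Proof.
move=> y; split.
  by move=> [z [[w [hw ->]] ->]]; exists w; rewrite mulmxA.
by move=> [w [hw ->]]; exists (h *m w); split; [exists w|rewrite mulmxA].
Qed.
Lemma lact_scale g l L : lat_eq (lact g (lscale l L)) (lscale l (lact g L)).
Proof.
move=> y; split.
  by move=> [z [[w [hw ->]] ->]]; exists (g *m w); split; [exists w|rewrite scalemxAr].
by move=> [z [[w [hw ->]] ->]]; exists (l *: w); split; [exists w|rewrite scalemxAr].
Qed.
Lemma lscale_comp a b L : lat_eq (lscale a (lscale b L)) (lscale (a * b) L).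
Proof.
move=> y; split.
  by move=> [z [[w [hw ->]] ->]]; exists w; rewrite scalerA.
by move=> [w [hw ->]]; exists (b *: w); split; [exists w|rewrite scalerA].
Qed.
Lemma lscale1 L : lat_eq (lscale 1 L) L.
Proof.
move=> y; split; first by move=> [z [hz ->]]; rewrite scale1r.
by move=> hy; exists y; rewrite scale1r.
Qed.

Lemma homot_eq L M : lat_eq L M -> homot L M.
Proof.
move=> h; exists 1; split; first exact: oner_neq0.
by move=> y; rewrite lscale1 h.
Qed.
Lemma homot_refl L : homot L L. Proof. exact: homot_eq. Qed.
Lemma homot_sym L M : homot L M -> homot M L.
Proof.
move=> [l [l0 h]]; exists l^-1; split; first by rewrite invr_neq0.
move=> y; split.
  move=> hy; exists (l *: y); split; first by apply/h; exists y.
  by rewrite scalerA mulVf // scale1r.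
move=> [z [/h [w [hw ->]] ->]]. by rewrite scalerA mulVf // scale1r.
Qed.
Lemma homot_trans L M N : homot L M -> homot M N -> homot L N.
Proof.
move=> [a [a0 ha]] [b [b0 hb]]; exists (b * a); split; first by rewrite mulf_neq0.
move=> y; rewrite hb -lscale_comp; apply: lscale_eq. by move=> z; rewrite ha.
Qed.
Lemma homot_scale l L : l != 0 -> homot L (lscale l L).
Proof. by move=> l0; exists l. Qed.
Lemma homot_lact g L M : homot L M -> homot (lact g L) (lact g M).
Proof.
move=> [l [l0 h]]; exists l; split => // y.
rewrite -lact_scale; apply: lact_eq. exact: h.
Qed.
Lemma homot_eq_l L L' M : lat_eq L L' -> homot L M -> homot L' M.
Proof. by move=> h1 h2; apply: homot_trans h2; apply: homot_eq; apply: lat_eq_sym. Qed.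
Lemma homot_eq_r L M M' : lat_eq M M' -> homot L M -> homot L M'.
Proof. by move=> h1 h2; apply: homot_trans h2 _; apply: homot_eq. Qed.
Lemma homot_lat_ofZ l B : l != 0 -> homot (lat_of B) (lat_of (l *: B)).
Proof. move=> l0; apply: homot_eq_r (homot_scale _ l0); exact: lscale_lat_of. Qed.

Definition intmx (W : 'M[K]_2) := forall i j, vge 0 (W i j).
Lemma intmx_mx2 a b c d : intmx (mx2 a b c d) <-> [/\ vge 0 a, vge 0 b, vge 0 c & vge 0 d].
Proof.
split; first by move=> h; split; [have := h 0 0|have := h 0 1|have := h 1 0|have := h 1 1]; rewrite mx2_coef.
by move=> [ha hb hc hd] i j; case: (ord2P i) => ->; case: (ord2P j) => ->; rewrite mx2_coef.
Qed.
Lemma vge0_det W : intmx W -> vge 0 (\det W).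
Proof.
rewrite [W]mx2E mx2_det => /intmx_mx2 [ha hb hc hd].
by apply: vgeB; apply: vge0M.
Qed.
Lemma intmx_mulcol W (c : 'cV[K]_2) : intmx W ->
  (forall i, Defs.Zp v (c i 0)) -> (forall i, Defs.Zp v ((W *m c) i 0)).
Proof.
rewrite [W]mx2E [c]col2E mx2_mulcol => /intmx_mx2 [ha hb hc hd] /Zp_col2 [h1 h2].
by apply/Zp_col2; split; apply: vgeD; apply: vge0M.
Qed.
Lemma lat_of_mulmx_sub B W : intmx W -> forall y, lat_of (B *m W) y -> lat_of B y.
Proof.
move=> hW y [c [hc ->]]; exists (W *m c); split; last by rewrite mulmxA.
exact: intmx_mulcol.
Qed.
Definition unimodular (W : 'M[K]_2) := intmx W /\ \det W != 0 /\ v (\det W) = 0.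
Lemma unimodular_inv W : unimodular W -> exists W', unimodular W' /\ W *m W' = 1.
Proof.
rewrite [W]mx2E; set a := W 0 0; set b := W 0 1; set c := W 1 0; set d := W 1 1.
move=> [/intmx_mx2 [ha hb hc hd] [d0 vd]].
rewrite mx2_det in d0 vd.
exists (mx2 (d / (a * d - b * c)) (- b / (a * d - b * c)) (- c / (a * d - b * c)) (a / (a * d - b * c))).
split; last by rewrite mx2_mul mx2_one; congr mx2; field.
split; first apply/intmx_mx2; first split; rewrite ?vge0_divunit //; try exact: vgeN.
rewrite mx2_det.
have -> : d / (a * d - b * c) * (a / (a * d - b * c)) - - b / (a * d - b * c) * (- c / (a * d - b * c))
  = (a * d - b * c)^-1 by field.
by rewrite invr_neq0 // vV // vd oppr0.
Qed.
Lemma lat_of_unimodular B W : unimodular W -> lat_eq (lat_of (B *m W)) (lat_of B).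
Proof.
move=> hW y; split; first by apply: lat_of_mulmx_sub; case: hW.
have [W' [hW' e]] := unimodular_inv hW.
move=> hy; apply: (@lat_of_mulmx_sub _ W'); first by case: hW'.
by rewrite -mulmxA e mulmx1.
Qed.
Lemma unimodular_mx2 a b c d : vge 0 a -> vge 0 b -> vge 0 c -> vge 0 d ->
  a * d - b * c != 0 -> v (a * d - b * c) = 0 -> unimodular (mx2 a b c d).
Proof. by move=> *; split; [apply/intmx_mx2|rewrite mx2_det]. Qed.
Lemma unimodular_unitmx W : unimodular W -> W \in unitmx.
Proof. by case=> _ [d0 _]; rewrite unitmxE unitfE. Qed.
Lemma unimodular_lower a : vge 0 a -> unimodular (mx2 1 0 a 1).
Proof.
move=> ha; apply: unimodular_mx2 => //; try exact: vge01; try by left.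
  by rewrite mul0r subr0 mulr1 oner_neq0.
by rewrite mul0r subr0 mulr1 v1.
Qed.
Lemma unimodular_upper b : vge 0 b -> unimodular (mx2 1 b 0 1).
Proof.
move=> hb; apply: unimodular_mx2 => //; try exact: vge01; try by left.
  by rewrite mulr0 subr0 mulr1 oner_neq0.
by rewrite mulr0 subr0 mulr1 v1.
Qed.
Lemma unimodular_diag u : u != 0 -> v u = 0 -> unimodular (mx2 u 0 0 1).
Proof.
move=> u0 vu; apply: unimodular_mx2; try exact: vge01; try by left.
- by right; rewrite vu.
- by rewrite mulr0 subr0 mulr1.
- by rewrite mulr0 subr0 mulr1.
Qed.
Lemma unimodular_swap : unimodular (mx2 0 1 1 0).
Proof.
apply: unimodular_mx2; try exact: vge01; try by left.
  by rewrite mul0r sub0r mulr1 oppr_eq0 oner_neq0.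
by rewrite mul0r sub0r mulr1 vN v1.
Qed.

Lemma lat_of1P y : lat_of 1 y <-> vge 0 (y 0 0) /\ vge 0 (y 1 0).
Proof.
rewrite lat_ofP; split.
  by move=> [a [b [ha [hb ->]]]]; rewrite mul1mx !mx2_coef.
move=> [h0 h1]; exists (y 0 0), (y 1 0); do 2 split => //; by rewrite mul1mx -col2E.
Qed.
Lemma lscaleP_lat_of1 y : lscale P (lat_of 1) y <-> vge 1 (y 0 0) /\ vge 1 (y 1 0).
Proof.
split.
  move=> [z [/lat_of1P [h0 h1] ->]]; rewrite !mxE; split; apply/vge1P; eauto.
move=> [/vge1P [a [ha ea]] /vge1P [b [hb eb]]].
exists (col2 a b); split; first by apply/lat_of1P; rewrite !mx2_coef.
by rewrite [y]col2E ea eb col2_scale.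
Qed.

Lemma lact_sub g L M : lsub L M -> lsub (lact g L) (lact g M).
Proof. by move=> h y [z [hz ->]]; exists z; split => //; apply: h. Qed.
Lemma lact_inv g L : g \in unitmx -> lat_eq (lact (invmx g) (lact g L)) L.
Proof.
move=> gu; apply: lat_eq_trans (lact_comp _ _ _) _.
rewrite mulVmx //. move=> y; split; first by move=> [z [hz ->]]; rewrite mul1mx.
by move=> hy; exists y; rewrite mul1mx.
Qed.
Lemma lact_inv' g L : g \in unitmx -> lat_eq (lact g (lact (invmx g) L)) L.
Proof.
move=> gu; have gu' : invmx g \in unitmx by rewrite unitmx_inv.
by have := lact_inv L gu'; rewrite invmxK.
Qed.
Lemma lsub_eq L L' M M' : lat_eq L L' -> lat_eq M M' -> lsub L M -> lsub L' M'.
Proof. by move=> h1 h2 h y /h1 /h /h2. Qed.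
Lemma lact_sub_inv g L M : g \in unitmx -> lsub (lact g L) (lact g M) -> lsub L M.
Proof.
move=> gu h; apply: (lsub_eq (lact_inv L gu) (lact_inv M gu)).
exact: lact_sub.
Qed.

Lemma lat_unit_basis L : is_lattice v L -> exists B, B \in unitmx /\ lat_eq L (lat_of B).
Proof. by move=> [B [Bu h]]; exists B. Qed.
Lemma is_lattice_homot L M : homot L M -> is_lattice v L -> is_lattice v M.
Proof.
move=> [l [l0 h]] [B [Bu hB]]; exists (l *: B); split.
  by rewrite unitmxZ ?unitfE.
move=> y; rewrite h; exact: (lat_eq_trans (lscale_eq l hB) (lscale_lat_of l B) y).
Qed.

Lemma intmxE W : intmx W <->
  (forall i, Defs.Zp v ((W *m col2 1 0) i 0)) /\ (forall i, Defs.Zp v ((W *m col2 0 1) i 0)).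
Proof.
rewrite [W]mx2E !mx2_mulcol !Zp_col2 intmx_mx2 !mulr1 !mulr0 !addr0 !add0r.
by split; [case|move=> [[? ?] [? ?]]].
Qed.
Lemma lat_of_coord B y : B \in unitmx -> lat_of B y -> forall i, Defs.Zp v ((invmx B *m y) i 0).
Proof. by move=> Bu [c [hc ->]]; rewrite mulKmx. Qed.
Lemma lat_of_change B B' : B \in unitmx -> (forall y, lat_of B' y -> lat_of B y) ->
  intmx (invmx B *m B').
Proof.
have s1 := vge01.
have s0 : vge 0 (0 : K) by left.
move=> Bu h; apply/intmxE; split; rewrite -mulmxA; apply: lat_of_coord => //; apply: h.
  by exists (col2 1 0); split => //; apply/Zp_col2.
by exists (col2 0 1); split => //; apply/Zp_col2.
Qed.
Lemma lat_of_eq_vdet B B' : B \in unitmx -> B' \in unitmx ->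
  lat_eq (lat_of B) (lat_of B') -> v (\det B) = v (\det B').
Proof.
move=> Bu B'u h.
have hU := lat_of_change Bu (fun y => proj2 (h y)).
have hU' := lat_of_change B'u (fun y => proj1 (h y)).
set U := invmx B *m B' in hU; set U' := invmx B' *m B in hU'.
have e : U *m U' = 1 by rewrite /U /U' mulmxA -(mulmxA _ B') mulmxV // mulmx1 mulVmx.
have eB : B' = B *m U by rewrite /U mulKVmx.
have dU : \det U * \det U' = 1 by rewrite -det_mulmx e det1.
have U0 : \det U != 0 by apply/eqP => h0; move: dU; rewrite h0 mul0r => /eqP; rewrite eq_sym oner_eq0.
have U'0 : \det U' != 0 by apply/eqP => h0; move: dU; rewrite h0 mulr0 => /eqP; rewrite eq_sym oner_eq0.
have h1 : v (\det U) + v (\det U') = 0 by rewrite -v_mul // dU v1.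
have := vge0_det hU; case=> [/eqP|h2]; first by rewrite (negbTE U0).
have := vge0_det hU'; case=> [/eqP|h3]; first by rewrite (negbTE U'0).
have B0 : \det B != 0 by rewrite -unitfE -unitmxE.
have h4 : v (\det U) <= 0 by rewrite -h1 lerDl.
have h5 : v (\det U) = 0 by apply/eqP; rewrite eq_le h4 h2.
by rewrite eB det_mulmx v_mul // h5 addr0.
Qed.

Lemma vtype_det L B i : B \in unitmx -> lat_eq L (lat_of B) -> vtype v L i ->
  i = odd `|v (\det B)|%N.
Proof.
move=> Bu hB [B' [[B'u hB'] <-]].
rewrite (@lat_of_eq_vdet B' B) // => y. split; last by move/hB/hB'.
by move/hB'/hB.
Qed.
Lemma vtype_lat_of B : B \in unitmx -> vtype v (lat_of B) (odd `|v (\det B)|%N).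
Proof. by move=> Bu; exists B; split. Qed.
Lemma vtype_eq L M i : lat_eq L M -> vtype v L i -> vtype v M i.
Proof. move=> h [B [[Bu hB] e]]; exists B; split => //; split => // y; rewrite -h; exact: hB. Qed.
Lemma vtype_homot L M i : homot L M -> vtype v L i -> vtype v M i.
Proof.
move=> [l [l0 h]] [B [[Bu hB] <-]].
have lBu : l *: B \in unitmx by rewrite unitmxZ ?unitfE.
apply: (@vtype_eq (lat_of (l *: B))).
  apply: lat_eq_sym; exact: (lat_eq_trans h (lat_eq_trans (lscale_eq l hB) (lscale_lat_of l B))).
have B0 : \det B != 0 by rewrite -unitfE -unitmxE.
have e : v (\det (l *: B)) = v l + v l + v (\det B).
  by rewrite detZ expr2 v_mul ?mulf_neq0 // v_mul.
have -> : (odd `|v (\det B)|%N) = odd `|v (\det (l *: B))|%N by rewrite e; lia.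
exact: vtype_lat_of.
Qed.
Lemma vtype_uniq L i j : vtype v L i -> vtype v L j -> i = j.
Proof.
move=> hi [B [[Bu hB] <-]]. exact: (vtype_det Bu hB hi).
Qed.

Definition Zp_submodule (N : lat K) :=
  (forall y z, N y -> N z -> N (y + z)) /\ (forall a y, vge 0 a -> N y -> N (a *: y)).

Lemma lat_of_submodule B : Zp_submodule (lat_of B).
Proof.
split=> [y z [c [hc ->]] [d [hd ->]]|a y ha [c [hc ->]]].
  exists (c + d); split; last by rewrite mulmxDr.
  by move=> i; rewrite mxE; exact: vgeD (hc i) (hd i).
exists (a *: c); split; last by rewrite scalemxAr.
by move=> i; rewrite mxE; exact: vge0M ha (hc i).
Qed.

Lemma submodule_eq L M : lat_eq L M -> Zp_submodule M -> Zp_submodule L.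
Proof.
move=> h [Madd Msc]; split=> [y z /h hy /h hz|a y ha /h hy]; apply/h.
  exact: Madd.
exact: Msc.
Qed.

Section IndexPSublattice.
Variable N : lat K.
Hypothesis N_submod : Zp_submodule N.
Hypothesis N_sub : lsub N (lat_of 1).
Hypothesis N_proper : ~ lsub (lat_of 1) N.
Hypothesis pN_sub : lsub (lscale P (lat_of 1)) N.
Hypothesis pN_proper : ~ lsub N (lscale P (lat_of 1)).

Let Nadd : forall y z, N y -> N z -> N (y + z) := proj1 N_submod.
Let Nsc : forall a y, vge 0 a -> N y -> N (a *: y) := proj2 N_submod.

Lemma index_p_e2 t : N (col2 0 t) -> vge 0 t -> ~ vge 1 t -> N (col2 0 1).
Proof.
move=> Nt ht nt; have [t0 vt] := vge0_unit ht nt.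
have -> : col2 0 1 = t^-1 *: col2 0 t by rewrite col2_scale; congr col2; field.
by apply: Nsc => //; apply: vge0V.
Qed.

Lemma index_p_not_e1_e2 : N (col2 1 0) -> N (col2 0 1) -> False.
Proof.
move=> N1 N2; apply: N_proper => y /lat_of1P [h0 h1].
have -> : y = y 0 0 *: col2 1 0 + y 1 0 *: col2 0 1.
  by apply: col2_ext; rewrite !mxE /=; ring.
by apply: Nadd; apply: Nsc.
Qed.

Lemma index_p_lower y : N y -> ~ vge 1 (y 0 0) ->
  lat_eq N (lat_of (mx2 1 0 (y 1 0 / y 0 0) P)).
Proof.
move=> Ny ny0; have /lat_of1P [hy0 hy1] := N_sub Ny.
have [u0 vu] := vge0_unit hy0 ny0.
set a := y 1 0 / y 0 0.
have ha : vge 0 a by apply/vge0_divunit.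
have Na : N (col2 1 a).
  have -> : col2 1 a = (y 0 0)^-1 *: y by apply: col2_ext; rewrite !mxE /= /a; field.
  by apply: Nsc => //; apply: vge0V.
move=> z; split=> [Nz|/lat_ofP [c0 [c1 [h0 [h1 ->]]]]]; last first.
  have -> : mx2 1 0 a P *m col2 c0 c1 = c0 *: col2 1 a + c1 *: col2 0 P.
    by rewrite mx2_mulcol !col2_scale col2_add; congr col2; ring.
  apply: Nadd; apply: Nsc => //; apply: pN_sub.
  by apply/lscaleP_lat_of1; rewrite !mx2_coef; split; [left|exact: vge1_P].
have /lat_of1P [hz0 hz1] := N_sub Nz.
set t := z 1 0 - z 0 0 * a.
have Nt : N (col2 0 t).
  have -> : col2 0 t = z + (- z 0 0) *: col2 1 a.
    by apply: col2_ext; rewrite !mxE /= /t; ring.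
  by apply: Nadd => //; apply: Nsc => //; apply: vgeN.
have ht : vge 0 t by apply: vgeB => //; apply: vge0M.
have /vge1P [t' [ht' et']] : vge 1 t.
  apply: NNPP => nt; apply: index_p_not_e1_e2 (index_p_e2 Nt ht nt).
  have -> : col2 1 0 = col2 1 a + (- a) *: col2 0 1.
    by rewrite col2_scale col2_add; congr col2; ring.
  by apply: Nadd => //; apply: Nsc (index_p_e2 Nt ht nt); apply: vgeN.
apply/lat_ofP; exists (z 0 0), t'; do 2 split => //.
rewrite mx2_mulcol [LHS]col2E; congr col2; first ring.
by rewrite -et' /t; ring.
Qed.

Lemma index_p_diag : (forall y, N y -> vge 1 (y 0 0)) ->
  lat_eq N (lat_of (mx2 P 0 0 1)).
Proof.
move=> N_vge1.
have [y [Ny nPy]] : exists y, N y /\ ~ lscale P (lat_of 1) y.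
  apply: NNPP => H; apply: pN_proper => y Ny; apply: NNPP => H2; apply: H; exists y; auto.
have /lat_of1P [_ hy1] := N_sub Ny.
have ny1 : ~ vge 1 (y 1 0) by move=> h; apply: nPy; apply/lscaleP_lat_of1; split => //; exact: (N_vge1 _ Ny).
have Ne2 : N (col2 0 1).
  apply: (index_p_e2 _ hy1 ny1).
  have -> : col2 0 (y 1 0) = y + (-1) *: col2 (y 0 0) 0.
    by apply: col2_ext; rewrite !mxE /=; ring.
  apply: Nadd => //; apply: Nsc; first exact: vge0N1.
  by apply: pN_sub; apply/lscaleP_lat_of1; rewrite !mx2_coef; split; [exact: (N_vge1 _ Ny)|left].
move=> z; split=> [Nz|/lat_ofP [c0 [c1 [h0 [h1 ->]]]]]; last first.
  have -> : mx2 P 0 0 1 *m col2 c0 c1 = c0 *: col2 P 0 + c1 *: col2 0 1.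
    by rewrite mx2_mulcol !col2_scale col2_add; congr col2; ring.
  apply: Nadd; apply: Nsc => //; apply: pN_sub.
  by apply/lscaleP_lat_of1; rewrite !mx2_coef; split; [exact: vge1_P|left].
have /lat_of1P [hz0 hz1] := N_sub Nz.
have /vge1P [t [ht et]] := N_vge1 _ Nz.
apply/lat_ofP; exists t, (z 1 0); do 2 split => //.
by rewrite mx2_mulcol [LHS]col2E et; congr col2; ring.
Qed.

Lemma index_p_sublattice :
  (exists a, vge 0 a /\ lat_eq N (lat_of (mx2 1 0 a P))) \/
  lat_eq N (lat_of (mx2 P 0 0 1)).
Proof.
have [[y [Ny ny0]]|N_vge1] := classic (exists y, N y /\ ~ vge 1 (y 0 0)).
  have /lat_of1P [hy0 hy1] := N_sub Ny.
  have [u0 vu] := vge0_unit hy0 ny0.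
  by left; exists (y 1 0 / y 0 0); split; [apply/vge0_divunit|exact: index_p_lower].
right; apply: index_p_diag => y Ny; apply: NNPP => ny; apply: N_vge1; exists y; auto.
Qed.

End IndexPSublattice.

(* Transport by (l B)^-1, where l B is a basis of the representative L', and
   classify the resulting sublattice of Z_p^2. *)
Lemma adj_lower_form L M B : adj p v L M -> B \in unitmx -> lat_eq L (lat_of B) ->
  (exists a, vge 0 a /\ homot M (lat_of (B *m mx2 1 0 a P))) \/
  homot M (lat_of (B *m mx2 P 0 0 1)).
Proof.
move=> [_ [latM [L' [M' [[l [l0 hl]] [hMM' [[sub1 nsub1] [sub2 nsub2]]]]]]]] Bu hB.
set B1 := l *: B.
have B1u : B1 \in unitmx by rewrite unitmxZ ?unitfE.
have iB1u : invmx B1 \in unitmx by rewrite unitmx_inv.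
have hL' : lat_eq L' (lat_of B1) :=
  lat_eq_trans hl (lat_eq_trans (lscale_eq l hB) (lscale_lat_of l B)).
have [BM [BMu hBM]] := lat_unit_basis (is_lattice_homot hMM' latM).
set N := lact (invmx B1) M'.
have hN : lat_eq N (lat_of (invmx B1 *m BM)) := lat_eq_trans (lact_eq _ hBM) (lact_lat_of _ _).
have N_submod : Zp_submodule N := submodule_eq hN (lat_of_submodule _).
have hL1 : lat_eq (lact (invmx B1) L') (lat_of 1).
  by apply: lat_eq_trans (lact_eq _ hL') _; apply: lat_eq_trans (lact_lat_of _ _) _; rewrite mulVmx.
have hLP : lat_eq (lact (invmx B1) (lscale P L')) (lscale P (lat_of 1)).
  exact: lat_eq_trans (lact_scale _ _ _) (lscale_eq _ hL1).
have Nsub1 : lsub N (lat_of 1) := lsub_eq (lat_eq_refl _) hL1 (@lact_sub (invmx B1) _ _ sub1).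
have Nnot1 : ~ lsub (lat_of 1) N.
  move=> h; apply: nsub1; apply: (lact_sub_inv iB1u).
  exact: lsub_eq (lat_eq_sym hL1) (lat_eq_refl _) h.
have NP : lsub (lscale P (lat_of 1)) N :=
  lsub_eq hLP (lat_eq_refl _) (@lact_sub (invmx B1) _ _ sub2).
have NnotP : ~ lsub N (lscale P (lat_of 1)).
  move=> h; apply: nsub2; apply: (lact_sub_inv iB1u).
  exact: lsub_eq (lat_eq_refl _) (lat_eq_sym hLP) h.
have fin : forall Q, lat_eq N (lat_of Q) -> homot M (lat_of (B *m Q)).
  move=> Q hQ.
  have e1 : lat_eq M' (lat_of (l *: (B *m Q))).
    apply: lat_eq_trans (lat_eq_sym (lact_inv' M' B1u)) _.
    apply: lat_eq_trans (lact_eq _ hQ) _.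
    by apply: lat_eq_trans (lact_lat_of _ _) _; rewrite /B1 -scalemxAl.
  apply: homot_trans (homot_eq_r e1 hMM') _.
  by apply: homot_sym; apply: homot_lat_ofZ.
case: (index_p_sublattice N_submod Nsub1 Nnot1 NP NnotP) => [[a [ha hQ]]|hQ].
  by left; exists a; split => //; apply: fin.
by right; apply: fin.
Qed.

Lemma adj_homot L M L2 M2 : adj p v L M -> homot L L2 -> homot M M2 -> adj p v L2 M2.
Proof.
move=> [lL [lM [L' [M' [h1 [h2 rest]]]]]] hL hM.
split; first exact: is_lattice_homot hL lL.
split; first exact: is_lattice_homot hM lM.
exists L', M'; split; first exact: homot_trans (homot_sym hL) h1.
by split => //; exact: homot_trans (homot_sym hM) h2.
Qed.
Lemma lscale_sub_inv l L M : l != 0 -> lsub (lscale l L) (lscale l M) -> lsub L M.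
Proof.
move=> l0 h y hy; have [z [hz e]] := h (l *: y) (ex_intro _ y (conj hy erefl)).
have -> : y = z; last by [].
by move/(congr1 (fun w => l^-1 *: w)): e; rewrite !scalerA mulVf // !scale1r.
Qed.
Lemma lscale_sub l L M : lsub L M -> lsub (lscale l L) (lscale l M).
Proof. by move=> h y [z [hz ->]]; exists z; split => //; apply: h. Qed.
Lemma adj_sym L M : adj p v L M -> adj p v M L.
Proof.
move=> [lL [lM [L' [M' [h1 [h2 [[s1 n1] [s2 n2]]]]]]]].
split => //; split => //; exists M', (lscale P L'); split => //; split.
  by apply: homot_trans h1 _; apply: homot_scale; apply: P_neq0.
split; first by split.
split; first exact: lscale_sub.
by move=> h; apply: n1; apply: (lscale_sub_inv P_neq0).
Qed.
Lemma adj_types L M i j : adj p v L M -> vtype v L i -> vtype v M j -> i != j.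
Proof.
move=> hadj hi hj.
have [B [Bu hB]] := lat_unit_basis (proj1 hadj).
have B0 : \det B != 0 by rewrite -unitfE -unitmxE.
have ei := vtype_det Bu hB hi.
have key : forall Q, \det Q = P -> homot M (lat_of (B *m Q)) -> j = odd `|(v (\det B) + 1)%R|%N.
  move=> Q dQ hQ.
  have BQu : B *m Q \in unitmx by rewrite unitmx_mul Bu unitmxE dQ unitfE P_neq0.
  have := vtype_det BQu (lat_eq_refl _) (vtype_homot hQ hj).
  by rewrite det_mulmx dQ v_mul ?P_neq0 // vP.
have ej : j = odd `|(v (\det B) + 1)%R|%N.
  case: (adj_lower_form hadj Bu hB) => [[a [_ h]]|h]; apply: (key _ _ h); rewrite mx2_det; ring.
rewrite ei ej; apply/negP => /eqP; lia.
Qed.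

(** * The standard apartment *)

Lemma vPn (n : nat) : v (P ^+ n) = n.
Proof.
elim: n => [|n IH]; first by rewrite expr0 v1.
by rewrite exprS v_mul ?expf_neq0 ?P_neq0 // vP IH -addn1 PoszD addrC.
Qed.
Lemma vPz (m : int) : v (P ^ m) = m.
Proof.
case: m => n; first by rewrite -exprnP vPn.
rewrite NegzE -exprnN vV ?expf_neq0 ?P_neq0 // vPn; lia.
Qed.
Lemma Pz_neq0 (m : int) : P ^ m != 0.
Proof. by rewrite expfz_neq0 // P_neq0. Qed.
Lemma vge0_Pz (m : int) : 0 <= m -> vge 0 (P ^ m).
Proof. by move=> hm; right; rewrite vPz. Qed.
Lemma PzD (m n : int) : P ^ (m + n) = P ^ m * P ^ n.
Proof. by rewrite expfzDr ?P_neq0. Qed.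

Definition diagP (m : int) := mx2 1 0 0 (P ^ m).
Definition stdv (m : int) := lat_of (diagP m).
Definition stdc (m : int) : chamber K := (stdv m, stdv (m + 1)).

Lemma diagP_unit m : diagP m \in unitmx.
Proof. by rewrite mx2_unit mul1r mulr0 subr0 Pz_neq0. Qed.
Lemma det_diagP m : \det (diagP m) = P ^ m.
Proof. by rewrite mx2_det; ring. Qed.
Lemma diagP_0 : diagP 0 = 1. Proof. by rewrite /diagP expr0z mx2_one. Qed.
Lemma diagP_1 : diagP 1 = mx2 1 0 0 P. Proof. by rewrite /diagP expr1z. Qed.
Lemma diagPS m : diagP (m + 1) = diagP m *m mx2 1 0 0 P.
Proof. by rewrite /diagP mx2_mul PzD expr1z; congr mx2; ring. Qed.

Lemma diagPS_P m : diagP (m + 1) *m mx2 P 0 0 1 = P *: diagP m.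
Proof. by rewrite /diagP mx2_mul mx2_scale PzD expr1z; congr mx2; ring. Qed.

Lemma lact_stdv g m : lat_eq (lact g (stdv m)) (lat_of (g *m diagP m)).
Proof. exact: lact_lat_of. Qed.
Lemma vtype_lact_stdv g m : \det g = 1 -> vtype v (lact g (stdv m)) (odd `|m|%N).
Proof.
move=> detg; apply: vtype_eq (lat_eq_sym (lact_stdv g m)) _.
have u : g *m diagP m \in unitmx by rewrite unitmx_mul diagP_unit unitmxE detg unitr1.
by have := vtype_lat_of u; rewrite det_mulmx detg mul1r det_diagP vPz.
Qed.

Lemma lat_of_lower_fix g (m n : int) a : vge 0 a -> m <= n ->
  lat_eq (lat_of (g *m mx2 1 0 (a * P ^ n) 1 *m diagP m)) (lat_of (g *m diagP m)).
Proof.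
move=> ha mn.
have e : P ^ n = P ^ m * P ^ (n - m) by rewrite -PzD addrC subrK.
have -> : g *m mx2 1 0 (a * P ^ n) 1 *m diagP m =
          (g *m diagP m) *m mx2 1 0 (a * P ^ (n - m)) 1.
  by rewrite -!mulmxA /diagP !mx2_mul e; congr (_ *m mx2 _ _ _ _); ring.
apply/lat_of_unimodular/unimodular_lower/vge0M => //.
by apply: vge0_Pz; rewrite subr_ge0.
Qed.
Lemma lat_of_upper_fix g (m n : int) b : vge 0 b -> n <= m ->
  lat_eq (lat_of (g *m mx2 1 (b * P ^ (- n)) 0 1 *m diagP m)) (lat_of (g *m diagP m)).
Proof.
move=> hb mn.
have e : P ^ (- n) * P ^ m = P ^ (m - n) by rewrite -PzD addrC.
have -> : g *m mx2 1 (b * P ^ (- n)) 0 1 *m diagP m =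
          (g *m diagP m) *m mx2 1 (b * P ^ (m - n)) 0 1.
  by rewrite -!mulmxA /diagP !mx2_mul -e; congr (_ *m mx2 _ _ _ _); ring.
apply/lat_of_unimodular/unimodular_upper/vge0M => //.
by apply: vge0_Pz; rewrite subr_ge0.
Qed.

Lemma adj_upper_form L M B : adj p v L M -> B \in unitmx -> lat_eq L (lat_of B) ->
  homot M (lat_of (B *m mx2 1 0 0 P)) \/
  (exists b, vge 0 b /\ homot M (lat_of (B *m mx2 P b 0 1))).
Proof.
move=> hadj Bu hB.
case: (adj_lower_form hadj Bu hB) => [[a [ha h]]|h]; last by right; exists 0; split => //; left.
case: (classic (vge 1 a)) => [/vge1P [t [ht et]]|na].
  left; apply: (homot_eq_r _ h).
  have -> : B *m mx2 1 0 a P = (B *m mx2 1 0 0 P) *m mx2 1 0 t 1.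
    by rewrite -mulmxA mx2_mul et; congr (_ *m mx2 _ _ _ _); ring.
  exact/lat_of_unimodular/unimodular_lower.
have [a0 va] := vge0_unit ha na.
right; exists a^-1; split; first exact: vge0V.
apply: (homot_eq_r _ h); apply: lat_eq_sym.
have -> : B *m mx2 P a^-1 0 1 = (B *m mx2 1 0 a P) *m mx2 P a^-1 (- a) 0.
  by rewrite -mulmxA mx2_mul; congr (_ *m mx2 _ _ _ _); field.
have e : P * 0 - a^-1 * - a = 1 by field.
apply/lat_of_unimodular/unimodular_mx2; rewrite ?e ?oner_neq0 ?v1 //.
- exact: vge0P.
- exact: vge0V.
- exact: vgeN.
- by left.
Qed.

Lemma ceq_refl C : ceq C C. Proof. by left; split; apply: homot_refl. Qed.
Lemma ceq_sym C D : ceq C D -> ceq D C.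
Proof. by case=> -[h1 h2]; [left|right]; split; apply: homot_sym. Qed.
Lemma ceq_trans C D E : ceq C D -> ceq D E -> ceq C E.
Proof.
case=> -[h1 h2] [] [h3 h4].
- by left; split; apply: homot_trans; eauto.
- by right; split; apply: homot_trans; eauto.
- by right; split; apply: homot_trans; eauto.
- by left; split; apply: homot_trans; eauto.
Qed.
Lemma ceq_cact g C D : ceq C D -> ceq (cact g C) (cact g D).
Proof. by case=> -[h1 h2]; [left|right]; split; apply: homot_lact. Qed.

Lemma scalar_homot g l L : l != 0 -> homot (lact g L) (lact (l *: g) L).
Proof.
move=> l0; apply: (homot_eq_r _ (homot_scale (lact g L) l0)).
move=> y; split.
  by move=> [z [[w [hw ->]] ->]]; exists w; split => //; rewrite scalemxAl.
by move=> [w [hw ->]]; exists (g *m w); split; [exists w|rewrite scalemxAl].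
Qed.

Lemma SL2_adjust_even h k : h \in unitmx -> v (\det h) = k + k ->
  exists g, \det g = 1 /\ forall m, homot (lact g (stdv m)) (lact h (stdv m)).
Proof.
move=> hu vk; have d0 : \det h != 0 by rewrite -unitfE -unitmxE.
set u := P ^ (k + k) / \det h.
have u0 : u != 0 by rewrite mulf_neq0 ?invr_neq0 ?Pz_neq0.
have vu : v u = 0 by rewrite v_mul ?invr_neq0 ?Pz_neq0 // vV // vPz vk subrr.
exists (P ^ (- k) *: (h *m mx2 u 0 0 1)); split.
  have e : P ^ (- k) * P ^ k = 1 by rewrite -PzD addNr expr0z.
  rewrite detZ det_mulmx mx2_det /u PzD expr2.
  have -> : P ^ (- k) * P ^ (- k) * (\det h * (P ^ k * P ^ k / \det h * 1 - 0 * 0))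
    = (P ^ (- k) * P ^ k) * (P ^ (- k) * P ^ k) by field.
  by rewrite e mulr1.
move=> m; apply: homot_sym; apply: homot_trans (scalar_homot _ _ (Pz_neq0 (- k))).
apply: homot_eq; apply: (lat_eq_trans (lact_stdv h m)); apply: lat_eq_sym.
apply: (lat_eq_trans (lact_stdv _ m)).
have -> : h *m mx2 u 0 0 1 *m diagP m = (h *m diagP m) *m mx2 u 0 0 1.
  by rewrite -!mulmxA /diagP !mx2_mul; congr (_ *m mx2 _ _ _ _); ring.
exact/lat_of_unimodular/unimodular_diag.
Qed.

Lemma stdv_reflect m : homot (lact (mx2 0 1 P 0) (stdv m)) (stdv (1 - m)).
Proof.
apply: (homot_eq_l (lat_eq_sym (lact_lat_of _ _))).
have -> : mx2 0 1 P 0 *m diagP m = P ^ m *: (diagP (1 - m) *m mx2 0 1 1 0).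
  rewrite /diagP !mx2_mul mx2_scale.
  have e : P ^ m * P ^ (1 - m) = P by rewrite -PzD addrC subrK expr1z.
  move: e; set a := P ^ m; set b := P ^ (1 - m) => e.
  by rewrite -e; congr mx2; ring.
apply: homot_sym; apply: homot_trans (homot_lat_ofZ _ (Pz_neq0 m)).
exact/homot_eq/lat_eq_sym/lat_of_unimodular/unimodular_swap.
Qed.

(* A scalar and a unimodular diagonal factor fix the determinant when v (det g0) is
   even; otherwise first compose with [mx2 0 1 P 0], which reflects the apartment. *)
Lemma SL2_adjust g0 : g0 \in unitmx -> exists g, \det g = 1 /\
  ((forall m, homot (lact g (stdv m)) (lact g0 (stdv m))) \/
   (forall m, homot (lact g (stdv m)) (lact g0 (stdv (1 - m))))).
Proof.
move=> g0u; have d0 : \det g0 != 0 by rewrite -unitfE -unitmxE.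
have [k [vk|vk]] : exists k : int, v (\det g0) = k + k \/ v (\det g0) = k + k + 1.
  by exists (v (\det g0) %/ 2)%Z; lia.
  have [g [detg h]] := SL2_adjust_even g0u vk.
  by exists g; split => //; left.
have det_w : \det (mx2 0 1 P 0) = - P by rewrite mx2_det; ring.
have wu : mx2 0 1 P 0 \in unitmx by rewrite unitmxE det_w unitfE oppr_eq0 P_neq0.
have h1u : g0 *m mx2 0 1 P 0 \in unitmx by rewrite unitmx_mul g0u wu.
have : v (\det (g0 *m mx2 0 1 P 0)) = (k + 1) + (k + 1).
  rewrite det_mulmx det_w v_mul ?oppr_eq0 ?P_neq0 // vN vP vk; lia.
move=> /(SL2_adjust_even h1u) [g [detg h]].
exists g; split => //; right => m.
apply: homot_trans (h m) _; apply: (homot_eq_l (lact_comp _ _ _)).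
exact/homot_lact/stdv_reflect.
Qed.

Lemma chamber_GL2_std C : is_chamber p v C -> exists g, g \in unitmx /\
  homot (lact g (stdv 0)) C.1 /\ homot (lact g (stdv 1)) C.2.
Proof.
move=> hC; have [B [Bu hB]] := lat_unit_basis (proj1 hC).
have hB' : homot (lat_of B) C.1 by apply: homot_eq; apply: lat_eq_sym.
have stdv_eq W : unimodular W -> homot (lact (B *m W) (stdv 0)) C.1.
  move=> hW; apply: homot_trans hB'; apply: homot_eq.
  by apply: (lat_eq_trans (lact_stdv _ _)); rewrite diagP_0 mulmx1; apply: lat_of_unimodular.
have [[a [ha h]]|h] := adj_lower_form hC Bu hB.
- have hW := unimodular_lower ha.
  exists (B *m mx2 1 0 a 1); split; first by rewrite unitmx_mul Bu unimodular_unitmx.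
  split; first exact: stdv_eq.
  apply: homot_trans (homot_sym h); apply: homot_eq; apply: (lat_eq_trans (lact_stdv _ _)).
  by rewrite diagP_1 -mulmxA mx2_mul !mulr1 !mul1r !mulr0 !mul0r !addr0 !add0r.
- exists (B *m mx2 0 1 1 0); split.
    by rewrite unitmx_mul Bu unimodular_unitmx //; apply: unimodular_swap.
  split; first by apply: stdv_eq; apply: unimodular_swap.
  apply: homot_trans (homot_sym h); apply: homot_eq; apply: (lat_eq_trans (lact_stdv _ _)).
  have -> : B *m mx2 0 1 1 0 *m diagP 1 = (B *m mx2 P 0 0 1) *m mx2 0 1 1 0.
    by rewrite diagP_1 -!mulmxA !mx2_mul; congr (_ *m mx2 _ _ _ _); ring.
  exact/lat_of_unimodular/unimodular_swap.
Qed.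

Lemma SL2_chamber_transitive C : is_chamber p v C ->
  exists g, \det g = 1 /\ ceq (cact g (stdc 0)) C.
Proof.
move=> hC; have [g0 [g0u [h0 h1]]] := chamber_GL2_std hC.
have [g [detg [h|h]]] := SL2_adjust g0u; exists g; split => //.
  by left; rewrite /= add0r; split; apply: homot_trans (h _) _.
right; rewrite /= add0r; split.
  by apply: homot_trans (h _) _; rewrite subr0.
by apply: homot_trans (h _) _; rewrite subrr.
Qed.

Lemma chamber_other_vertex E Y : is_chamber p v E -> (Y = E.1 \/ Y = E.2) ->
  exists Z, adj p v Y Z /\ ceq (Y, Z) E.
Proof.
case: E => E1 E2 /= hE [->|->].
  by exists E2; split => //; apply: ceq_refl.
exists E1; split; first exact: adj_sym.
by right; split; apply: homot_refl.
Qed.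
Lemma ceq_vertex (A B Xv : lat K) D : ceq (A, B) D -> (Xv = D.1 \/ Xv = D.2) ->
  homot A Xv \/ homot B Xv.
Proof. by case=> -[/= h1 h2] [->|->]; auto. Qed.
Lemma ceq_swap L M : ceq (L, M) (M, L).
Proof. by right; split; apply: homot_refl. Qed.
Lemma ceq_pair_r L M M' : homot M M' -> ceq (L, M) (L, M').
Proof. by left; split => //; apply: homot_refl. Qed.

Lemma iadj_pivot (A B : lat K) D E t : ceq (A, B) D -> iadj p v t D E ->
  vtype v A t -> vtype v B (~~ t) ->
  exists Z, adj p v A Z /\ ceq (A, Z) E /\ ~ ceq (A, B) E.
Proof.
move=> hD [_ [hE [nDE [X [Y [hX [hY [hXY hXt]]]]]]]] tA tB.
have hAX : homot A X.
  case: (ceq_vertex hD hX) => // hBX.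
  by have := vtype_uniq (vtype_homot (homot_sym hBX) hXt) tB; case: (t).
have hAY := homot_trans hAX hXY.
have [Z [hYZ hE']] := chamber_other_vertex hE hY.
exists Z; split; first exact: adj_homot hYZ (homot_sym hAY) (homot_refl _).
split; first by apply: ceq_trans hE'; left; split => //; apply: homot_refl.
by move=> hAB; apply: nDE; apply: ceq_trans (ceq_sym hD) hAB.
Qed.

Lemma det1_unitmx g : \det g = 1 -> g \in unitmx.
Proof. by move=> h; rewrite unitmxE h unitr1. Qed.

Lemma std_step_up m g D E : \det g = 1 -> ceq (cact g (stdc m)) D ->
  iadj p v (odd `|(m + 1)%R|%N) D E ->
  exists g', \det g' = 1 /\
    (forall k, k <= m + 1 -> homot (lact g' (stdv k)) (lact g (stdv k))) /\
    ceq (cact g' (stdc (m + 1))) E.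
Proof.
move=> detg hgD hDE.
have tm : vtype v (lact g (stdv m)) (~~ odd `|(m + 1)%R|%N).
  by have := vtype_lact_stdv m detg; congr vtype; lia.
have [Z [hBZ [hE nE]]] :=
  iadj_pivot (ceq_trans (ceq_swap _ _) hgD) hDE (vtype_lact_stdv _ detg) tm.
have Bu : g *m diagP (m + 1) \in unitmx by rewrite unitmx_mul det1_unitmx // diagP_unit.
have [[a [ha hZ]]|hZ] := adj_lower_form hBZ Bu (lact_stdv _ _); last first.
  exfalso; apply/nE/(ceq_trans _ hE)/ceq_pair_r/homot_sym.
  apply: homot_trans hZ _; apply: homot_eq_r (lat_eq_sym (lact_stdv _ _)) _.
  have -> : g *m diagP (m + 1) *m mx2 P 0 0 1 = P *: (g *m diagP m).
    by rewrite -mulmxA diagPS_P scalemxAr.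
  by apply: homot_sym; apply: homot_lat_ofZ.
set g' := g *m mx2 1 0 (a * P ^ (m + 1)) 1.
have fix_k k : k <= m + 1 -> homot (lact g' (stdv k)) (lact g (stdv k)).
  move=> hk; apply: homot_eq; apply: (lat_eq_trans (lact_stdv _ _)).
  exact: lat_eq_trans (lat_of_lower_fix _ ha hk) (lat_eq_sym (lact_stdv _ _)).
exists g'; split; first by rewrite det_mulmx detg mx2_det; ring.
split => //; apply: ceq_trans hE; left; split; first exact: fix_k.
apply: homot_sym; apply: homot_trans hZ _; apply: homot_eq; apply: lat_eq_sym.
apply: (lat_eq_trans (lact_stdv _ _)); rewrite diagPS.
have -> : g' *m (diagP (m + 1) *m mx2 1 0 0 P) = g *m diagP (m + 1) *m mx2 1 0 a P.
  by rewrite /g' /diagP -!mulmxA !mx2_mul PzD expr1z; congr (_ *m mx2 _ _ _ _); ring.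
exact: lat_eq_refl.
Qed.

Lemma std_step_down m g D E : \det g = 1 -> ceq (cact g (stdc m)) D ->
  iadj p v (odd `|m|%N) D E ->
  exists g', \det g' = 1 /\
    (forall k, m <= k -> homot (lact g' (stdv k)) (lact g (stdv k))) /\
    ceq (cact g' (stdc (m - 1))) E.
Proof.
move=> detg hgD hDE.
have tm : vtype v (lact g (stdv (m + 1))) (~~ odd `|m|%N).
  by have := vtype_lact_stdv (m + 1) detg; congr vtype; lia.
have [Z [hAZ [hE nE]]] := iadj_pivot hgD hDE (vtype_lact_stdv _ detg) tm.
have Au : g *m diagP m \in unitmx by rewrite unitmx_mul det1_unitmx // diagP_unit.
have [hZ|[b [hb hZ]]] := adj_upper_form hAZ Au (lact_stdv _ _).
  exfalso; apply/nE/(ceq_trans _ hE)/ceq_pair_r/homot_sym.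
  apply: homot_trans hZ _; apply: homot_eq; apply: lat_eq_sym.
  by apply: (lat_eq_trans (lact_stdv _ _)); rewrite diagPS mulmxA.
set g' := g *m mx2 1 (b * P ^ (- m)) 0 1.
have fix_k k : m <= k -> homot (lact g' (stdv k)) (lact g (stdv k)).
  move=> hk; apply: homot_eq; apply: (lat_eq_trans (lact_stdv _ _)).
  exact: lat_eq_trans (lat_of_upper_fix _ hb hk) (lat_eq_sym (lact_stdv _ _)).
exists g'; split; first by rewrite det_mulmx detg mx2_det; ring.
split => //; apply: (ceq_trans _ hE); right; rewrite /= subrK; split; last first.
  exact: fix_k _ (lexx _).
apply: homot_sym; apply: homot_trans hZ _.
apply: homot_eq_r (lat_eq_sym (lact_stdv _ _)) _.
have e1 : P ^ (- m) * P ^ (m - 1) = P^-1 by rewrite -PzD addKr exprN1.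
have e2 : P * P ^ (m - 1) = P ^ m by rewrite -{1}[P]expr1z -PzD addrC subrK.
have -> : g *m diagP m *m mx2 P b 0 1 = P *: (g' *m diagP (m - 1)).
  have e : diagP m *m mx2 P b 0 1 = P *: (mx2 1 (b * P ^ (- m)) 0 1 *m diagP (m - 1)).
    rewrite /diagP !mx2_mul mx2_scale -e2.
    move: e1; set x := P ^ (- m); set y := P ^ (m - 1) => e1.
    congr mx2; try ring.
    by rewrite !mul1r mul0r addr0 add0r -mulrA e1 mulrCA mulfV // mulr1.
  by rewrite -mulmxA e -scalemxAr mulmxA.
by apply: homot_sym; apply: homot_lat_ofZ.
Qed.

(** * Galleries *)

Fixpoint alternating (b : bool) (ws : seq (bool * chamber K)) : Prop :=
  match ws with [::] => True | (i, _) :: ws' => i = b /\ alternating (~~ b) ws' end.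

Lemma ceq_cact_homot g g' C :
  homot (lact g C.1) (lact g' C.1) -> homot (lact g C.2) (lact g' C.2) ->
  ceq (cact g C) (cact g' C).
Proof. by move=> h1 h2; left. Qed.

Lemma std_gallery_up C0 C' ws : forall (m : nat) D g, \det g = 1 -> ceq (cact g (stdc 0)) C0 ->
  ceq (cact g (stdc m)) D -> gallery p v D ws C' -> alternating (~~ odd m) ws ->
  exists g', \det g' = 1 /\ ceq (cact g' (stdc 0)) C0 /\ ceq (cact g' (stdc (m + size ws)%N)) C'.
Proof.
elim: ws => [|[i E] ws IH] m D g detg h0 hD /=.
  by move=> hDC' _; exists g; split => //; split => //; rewrite addn0; apply: ceq_trans hD hDC'.
move=> [hDE hg] [hi halt].
have ht : i = odd `|(m%:Z + 1)%R|%N by rewrite hi; lia.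
rewrite ht in hDE; have [g' [detg' [hfix hE]]] := std_step_up detg hD hDE.
have h0' : ceq (cact g' (stdc 0)) C0.
  apply: ceq_trans h0; apply: ceq_cact_homot; apply: hfix => //=; lia.
have hE' : ceq (cact g' (stdc m.+1)) E by rewrite -addn1 PoszD.
have halt' : alternating (~~ odd m.+1) ws by rewrite oddS.
have [g'' [detg'' [h0'' hC]]] := IH m.+1 E g' detg' h0' hE' hg halt'.
by exists g''; split => //; split => //; rewrite -addSnnS.
Qed.

Lemma std_gallery_down C0 C' ws : forall (m : nat) D g, \det g = 1 -> ceq (cact g (stdc 0)) C0 ->
  ceq (cact g (stdc (- m%:Z))) D -> gallery p v D ws C' -> alternating (odd m) ws ->
  exists g', \det g' = 1 /\ ceq (cact g' (stdc 0)) C0 /\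
    ceq (cact g' (stdc (- (m + size ws)%N%:Z))) C'.
Proof.
elim: ws => [|[i E] ws IH] m D g detg h0 hD /=.
  by move=> hDC' _; exists g; split => //; split => //; rewrite addn0; apply: ceq_trans hD hDC'.
move=> [hDE hg] [hi halt].
have ht : i = odd `|(- m%:Z)%R|%N by rewrite hi; lia.
rewrite ht in hDE; have [g' [detg' [hfix hE]]] := std_step_down detg hD hDE.
have h0' : ceq (cact g' (stdc 0)) C0.
  apply: ceq_trans h0; apply: ceq_cact_homot; apply: hfix => //=; lia.
have hE' : ceq (cact g' (stdc (- m.+1%:Z))) E.
  by have -> : - m.+1%:Z = - m%:Z - 1 by lia.
have [g'' [detg'' [h0'' hC]]] := IH m.+1 E g' detg' h0' hE' hg halt.
by exists g''; split => //; split => //; rewrite -addSnnS.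
Qed.

Fixpoint type_alternating (ws : seq (bool * chamber K)) : Prop :=
  match ws with
  | (i, _) :: (((j, _) :: _) as ws') => i != j /\ type_alternating ws'
  | _ => True
  end.
Lemma type_alternating_alt i D ws : type_alternating ((i, D) :: ws) -> alternating i ((i, D) :: ws).
Proof.
elim: ws i D => [|[j E] ws IH] i D /=; first by split.
move=> [ij h]; split => //.
have e : ~~ i = j by clear -ij; move: ij; case: i; case: j.
rewrite e; exact: (IH _ _ h).
Qed.
Lemma type_alternating_or ws : type_alternating ws \/
  exists pre i D1 D2 post, ws = pre ++ (i, D1) :: (i, D2) :: post.
Proof.
elim: ws => [|[i D1] ws IH]; first by left.
case: ws IH => [|[j D2] ws] IH; first by left.
case: (eqVneq i j) => [<-|ij].
  by right; exists [::], i, D1, D2, ws.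
case: IH => [h|[pre [k [E1 [E2 [post e]]]]]]; first by left.
by right; exists ((i, D1) :: pre), k, E1, E2, post; rewrite e.
Qed.

Lemma gallery_cat C pre rest C' : gallery p v C (pre ++ rest) C' <->
  gallery p v C pre (last C (map snd pre)) /\ gallery p v (last C (map snd pre)) rest C'.
Proof.
elim: pre C => [|[i D] pre IH] C /=.
  by split; [move=> h; split => //; apply: ceq_refl|case].
rewrite IH; split; first by move=> [h1 [h2 h3]].
by move=> [[h1 h2] h3].
Qed.

Lemma ceq_vertex_in C D Xv : ceq C D -> (Xv = D.1 \/ Xv = D.2) ->
  exists X', (X' = C.1 \/ X' = C.2) /\ homot X' Xv.
Proof.
case=> -[h1 h2] [->|->].
- by exists C.1; split; [left|].
- by exists C.2; split; [right|].
- by exists C.2; split; [right|].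
- by exists C.1; split; [left|].
Qed.

Lemma gallery_ceq_l D0 D2 ws C' : ceq D0 D2 -> is_chamber p v D0 ->
  gallery p v D2 ws C' -> gallery p v D0 ws C'.
Proof.
case: ws => [|[j E] ws] h hD0 /=; first exact: ceq_trans.
move=> [[_ [hE [nDE [Xv [Yv [hX [hY [hXY hXt]]]]]]]] hg]; split => //.
split => //; split => //; split.
  by move=> h'; apply: nDE; apply: ceq_trans (ceq_sym h) h'.
have [X' [hX' hX'X]] := ceq_vertex_in h hX.
exists X', Yv; split => //; split => //; split; first exact: homot_trans hX'X hXY.
exact: vtype_homot (homot_sym hX'X) hXt.
Qed.

Lemma iadj_trans i D0 D1 D2 : iadj p v i D0 D1 -> iadj p v i D1 D2 -> ~ ceq D0 D2 ->
  iadj p v i D0 D2.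
Proof.
move=> [h0 [h1 [_ [X0 [Y1 [hX0 [hY1 [hXY1 ht0]]]]]]]] [_ [h2 [_ [X1 [Y2 [hX1 [hY2 [hXY2 ht1]]]]]]]] n02.
split => //; split => //; split => //; exists X0, Y2; split => //; split => //; split => //.
have tY1 := vtype_homot hXY1 ht0.
apply: (homot_trans hXY1 (homot_trans _ hXY2)).
case: hY1 => eY; case: hX1 => eX; rewrite eY eX; try exact: homot_refl.
- by rewrite eY in tY1; rewrite eX in ht1; move: (adj_types h1 tY1 ht1); rewrite eqxx.
- by rewrite eY in tY1; rewrite eX in ht1; move: (adj_types h1 ht1 tY1); rewrite eqxx.
Qed.

(* Two consecutive steps of the same type can be merged or cancelled. *)
Lemma minimal_gallery_alternating C ws C' : gallery p v C ws C' -> is_chamber p v C ->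
  (forall ws', gallery p v C ws' C' -> (size ws <= size ws')%N) -> type_alternating ws.
Proof.
move=> hg hC hmin; case: (type_alternating_or ws) => // -[pre [i [D1 [D2 [post e]]]]].
exfalso; rewrite e in hg hmin.
move: hg => /gallery_cat [hpre /= [h01 [h12 hpost]]].
set D0 := last C (map snd pre) in hpre h01 hpost.
have hD0 : is_chamber p v D0 by case: h01.
case: (classic (ceq D0 D2)) => [c02|n02].
  have := hmin (cat pre post); rewrite !size_cat /=.
  have -> : (size pre + (size post).+2 <= size pre + size post)%N = false by lia.
  move=> H; apply: notF; apply: H; apply/gallery_cat; split => //.
  exact: gallery_ceq_l c02 hD0 hpost.
have := hmin (cat pre ((i, D2) :: post)); rewrite !size_cat /=.
have -> : (size pre + (size post).+2 <= size pre + (size post).+1)%N = false by lia.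
move=> H; apply: notF; apply: H; apply/gallery_cat; split => //=; split => //.
exact: iadj_trans h01 h12 n02.
Qed.

(* The minimal galleries from [stdc 0] go up or down the standard apartment according
   to the type of their first step. *)
Definition std_index (w : seq bool) : int :=
  if w is true :: _ then (size w)%:Z else - (size w)%:Z.

Lemma SL2_std_pair C C' w : is_chamber p v C -> weyl_dist p v C C' w ->
  exists g, \det g = 1 /\ ceq (cact g (stdc 0)) C /\ ceq (cact g (stdc (std_index w))) C'.
Proof.
move=> hC [ws [hg [hw hmin]]].
have hal := minimal_gallery_alternating hg hC hmin.
have [g0 [dg0' h0]] := SL2_chamber_transitive hC.
case: ws hg hw hmin hal => [|[i D] ws] hg hw hmin hal.
  by exists g0; split => //; split => //; rewrite -hw /= oppr0; apply: ceq_trans h0 hg.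
have halt := type_alternating_alt hal.
rewrite -hw /std_index /=.
case: i hg halt {hal hmin hw} => hg halt.
  have := std_gallery_up (m := 0) dg0' h0 h0 hg halt; rewrite add0n size_map //.
have h0' : ceq (cact g0 (stdc (- (0%N)%:Z))) C by rewrite oppr0.
have := std_gallery_down dg0' h0 h0' hg halt; rewrite add0n size_map //.
Qed.

(** * Density of the norm-one group and openness of stabilisers *)

Definition mvge n (A : 'M[K]_2) := forall i j, vge n (A i j).
Lemma mvge_mx2 n a b c d : mvge n (mx2 a b c d) <-> [/\ vge n a, vge n b, vge n c & vge n d].
Proof.
split; first by move=> h; split; [have := h 0 0|have := h 0 1|have := h 1 0|have := h 1 1]; rewrite mx2_coef.
by move=> [ha hb hc hd] i j; case: (ord2P i) => ->; case: (ord2P j) => ->; rewrite mx2_coef.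
Qed.
Lemma mvge_le m n A : m <= n -> mvge n A -> mvge m A.
Proof. by move=> mn h i j; apply: vge_le mn (h i j). Qed.
Lemma mvgeD n A B : mvge n A -> mvge n B -> mvge n (A + B).
Proof. by move=> hA hB i j; rewrite mxE; apply: vgeD. Qed.
Lemma mvgeN n A : mvge n A -> mvge n (- A).
Proof. by move=> hA i j; rewrite mxE; apply: vgeN. Qed.
Lemma mvgeM a b A B : mvge a A -> mvge b B -> mvge (a + b) (A *m B).
Proof.
rewrite [A]mx2E [B]mx2E mx2_mul => /mvge_mx2 [h1 h2 h3 h4] /mvge_mx2 [k1 k2 k3 k4].
by apply/mvge_mx2; split; apply: vgeD; apply: vgeM.
Qed.
Lemma mvgeZ a b x A : vge a x -> mvge b A -> mvge (a + b) (x *: A).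
Proof. by move=> hx hA i j; rewrite mxE; apply: vgeM. Qed.
Lemma mvge_exists A m : exists n, n <= m /\ mvge n A.
Proof.
have [n1 [l1 h1]] := vge_exists (A 0 0) m.
have [n2 [l2 h2]] := vge_exists (A 0 1) n1.
have [n3 [l3 h3]] := vge_exists (A 1 0) n2.
have [n4 [l4 h4]] := vge_exists (A 1 1) n3.
exists n4; split; first by lia.
rewrite [A]mx2E; apply/mvge_mx2; split => //; apply: vge_le h1 || apply: vge_le h2 || apply: vge_le h3; lia.
Qed.
Lemma mvge01 : mvge 0 (1 : 'M[K]_2).
Proof. by rewrite mx2_one; apply/mvge_mx2; split; try exact: vge01; left. Qed.

Lemma vge_det_perturb n b (y F : 'M[K]_2) : 0 <= n -> b <= 0 -> mvge n F -> mvge b y ->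
  vge (n + b) (\det (y + F) - \det y).
Proof.
move=> n0 b0; rewrite [y]mx2E [F]mx2E mx2_add !mx2_det.
move=> /mvge_mx2 [f1 f2 f3 f4] /mvge_mx2 [y1 y2 y3 y4].
set a := y 0 0; set b' := y 0 1; set c := y 1 0; set d := y 1 1.
set e1 := F 0 0; set e2 := F 0 1; set e3 := F 1 0; set e4 := F 1 1.
have -> : (a + e1) * (d + e4) - (b' + e2) * (c + e3) - (a * d - b' * c)
  = (a * e4 + e1 * d + e1 * e4) - (b' * e3 + e2 * c + e2 * e3) by ring.
have hnn : vge (n + b) (e1 * e4) by apply: vge_le (vgeM f1 f4); lia.
have hnn' : vge (n + b) (e2 * e3) by apply: vge_le (vgeM f2 f3); lia.
have hb1 : forall x y, vge b x -> vge n y -> vge (n + b) (x * y).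
  by move=> x z hx hz; rewrite addrC; apply: vgeM.
have hb2 : forall x y, vge n x -> vge b y -> vge (n + b) (x * y).
  by move=> x z hx hz; apply: vgeM.
apply: vgeB; apply: vgeD; try apply: vgeD; auto.
Qed.

Lemma lattice_stab_open L : is_lattice v L -> exists n, forall (E0 g : 'M[K]_2), mvge n E0 ->
  \det (1 + E0) = 1 -> homot (lact (g *m (1 + E0)) L) (lact g L).
Proof.
move=> hL; have [B [Bu hB]] := lat_unit_basis hL.
have [b1 [b1le hb1]] := mvge_exists (invmx B) 0.
have [b2 [b2le hb2]] := mvge_exists B 0.
exists (- (b1 + b2)) => E0 g hE dE.
set W := invmx B *m (1 + E0) *m B.
have hW : W = 1 + invmx B *m E0 *m B by rewrite /W mulmxDr mulmx1 mulmxDl mulVmx.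
have uW : unimodular W.
  split.
    move=> i j; rewrite hW; apply: (mvgeD mvge01) => //.
    have := mvgeM (mvgeM hb1 hE) hb2.
    by move=> H; apply: (mvge_le _ H); lia.
  have -> : \det W = 1.
    have B0 : \det B != 0 by rewrite -unitfE -unitmxE.
    by rewrite /W !det_mulmx det_inv dE mulr1 mulVf.
  by rewrite oner_neq0 v1.
have eB : (1 + E0) *m B = B *m W by rewrite /W !mulmxA mulmxV // mul1mx.
apply: homot_eq.
apply: lat_eq_trans (lact_eq _ hB) _.
apply: lat_eq_trans (lact_lat_of _ _) _.
apply: lat_eq_sym; apply: lat_eq_trans (lact_eq _ hB) _.
apply: lat_eq_trans (lact_lat_of _ _) _.
rewrite -mulmxA eB mulmxA.
apply: lat_eq_sym; exact: lat_of_unimodular.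
Qed.

Lemma sqr_over_det_near (g y : 'M[K]_2) (t : K) (n0 : int) : \det g = 1 ->
  y *m y = t *: g -> \det y = t -> t != 0 ->
  exists k, forall F, mvge k F -> \det (y + F) != 0 /\
    exists E0 : 'M[K]_2, mvge n0 E0 /\ (\det (y + F))^-1 *: ((y + F) *m (y + F)) = g *m (1 + E0).
Proof.
move=> detg yy dety t0.
have hginv : g *m \adj g = 1 by rewrite mul_mx_adj detg.
have [by' [byle hby]] := mvge_exists y 0.
have [bg [bgle hbg]] := mvge_exists g 0.
have [bgi [bgile hbgi]] := mvge_exists (\adj g) 0.
have [k [k0 [hk1 hk2]]] : exists k : int,
    0 <= k /\ v t < k + by' /\ n0 <= k + by' + bg + bgi - v t.
  by exists (`|n0| + `|v t| - by' - bg - bgi + 1)%R; lia.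
exists k => F hF; set Y := y + F.
set delta := \det Y - \det y.
have hdelta : vge (k + by') delta by rewrite /delta /Y; apply: vge_det_perturb.
have detY : \det Y = t + delta by rewrite /delta dety addrC subrK.
have [dY0 vdY] : \det Y != 0 /\ v (\det Y) = v t.
  by rewrite detY; apply: v_add_small hdelta hk1.
split => //; set X := (\det Y)^-1 *: (Y *m Y).
exists (\adj g *m (X - g)); split; last first.
  by rewrite mulmxDr mulmx1 mulmxA hginv mul1mx addrC subrK.
have hXg : X - g = (\det Y)^-1 *: (y *m F + F *m y + F *m F - delta *: g).
  by rewrite -(sqr_perturb F delta yy) -detY scalerBr scalerA mulVf // scale1r.
rewrite hXg.
have hD : mvge (k + by' + bg) (y *m F + F *m y + F *m F - delta *: g).
  apply: mvgeD; last by apply: mvgeN; apply: mvgeZ.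
  apply: mvgeD; first apply: mvgeD.
  - by apply: mvge_le (mvgeM hby hF); lia.
  - by apply: mvge_le (mvgeM hF hby); lia.
  - by apply: mvge_le (mvgeM hF hF); lia.
have := mvgeM hbgi (mvgeZ (vgeV dY0) hD).
by rewrite vdY => H; apply: mvge_le H; lia.
Qed.

Lemma cact_comp h g C : ceq (cact h (cact g C)) (cact (h *m g) C).
Proof. by left; split; apply: homot_eq; apply: lact_comp. Qed.

Lemma cact_opp g C : ceq (cact (- g) C) (cact g C).
Proof.
have n1 : (-1 : K) != 0 by rewrite oppr_eq0 oner_neq0.
by left; split; rewrite -scaleN1r; apply: homot_sym; apply: scalar_homot.
Qed.

Lemma chamber_stab_open C : is_chamber p v C -> exists n, forall (E0 g : 'M[K]_2),
  mvge n E0 -> \det (1 + E0) = 1 -> ceq (cact (g *m (1 + E0)) C) (cact g C).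
Proof.
move=> hC; have [n1 s1] := lattice_stab_open (proj1 hC).
have [n2 s2] := lattice_stab_open (proj1 (proj2 hC)).
exists (Num.max n1 n2) => E0 g hE dE; left; split.
  by apply: s1 => //; apply: mvge_le hE; rewrite le_max lexx.
by apply: s2 => //; apply: mvge_le hE; rewrite le_max lexx orbT.
Qed.

Lemma SL2_weyl_transitive w C1 C1' C2 C2' : is_chamber p v C1 -> is_chamber p v C2 ->
  weyl_dist p v C1 C1' w -> weyl_dist p v C2 C2' w ->
  exists h, \det h = 1 /\ ceq (cact h C1) C2 /\ ceq (cact h C1') C2'.
Proof.
move=> hC1 hC2 hw1 hw2.
have [g1 [d1 [a1 b1]]] := SL2_std_pair hC1 hw1.
have [g2 [d2 [a2 b2]]] := SL2_std_pair hC2 hw2.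
have g1u := det1_unitmx d1.
exists (g2 *m invmx g1); split; first by rewrite det_mulmx det_inv d1 d2 invr1 mulr1.
have tr X C D : ceq (cact g1 X) C -> ceq (cact g2 X) D -> ceq (cact (g2 *m invmx g1) C) D.
  move=> h1 h2; apply: ceq_trans (ceq_sym (ceq_cact _ h1)) _.
  by apply: ceq_trans (cact_comp _ _ _) _; rewrite mulmxKV.
by split; [exact: tr a1 a2|exact: tr b1 b2].
Qed.

Section Approximation.
Variable iota : {rmorphism rat -> K}.
Hypothesis rat_dense : forall (x : K) (n : int), exists q : rat, close v n x (iota q).
Variables (alpha beta : rat) (s : K).
Hypothesis s_sqr : s * s = iota alpha.
Hypothesis alpha_neq0 : alpha != 0.
Hypothesis beta_neq0 : beta != 0.

Let s_neq0 : s != 0.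
Proof.
by apply/eqP => s0; move: s_sqr; rewrite s0 mul0r => /esym/eqP; rewrite fmorph_eq0 (negbTE alpha_neq0).
Qed.
Let iota_beta_neq0 : iota beta != 0. Proof. by rewrite fmorph_eq0. Qed.
Let two_neq0 : (2 : K) != 0.
Proof. by rewrite -(rmorph_nat iota) fmorph_eq0 pnatr_eq0. Qed.

(* [qmx] extended K-linearly. *)
Definition qmxK (z1 z2 z3 z4 : K) : 'M[K]_2 :=
  mx2 (z1 + z2 * s) (iota beta * (z3 + z4 * s)) (z3 - z4 * s) (z1 - z2 * s).

Lemma qmxK_onto (y : 'M[K]_2) : exists z1 z2 z3 z4, y = qmxK z1 z2 z3 z4.
Proof.
exists ((y 0 0 + y 1 1) / 2), ((y 0 0 - y 1 1) / (2 * s)),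
  ((y 0 1 / iota beta + y 1 0) / 2), ((y 0 1 / iota beta - y 1 0) / (2 * s)).
by rewrite [LHS]mx2E /qmxK; congr mx2; field; rewrite ?s_neq0 ?two_neq0 ?iota_beta_neq0.
Qed.

Lemma qmxK_sub z1 z2 z3 z4 e1 e2 e3 e4 :
  qmxK e1 e2 e3 e4 - qmxK z1 z2 z3 z4 = qmxK (e1 - z1) (e2 - z2) (e3 - z3) (e4 - z4).
Proof.
by rewrite /qmxK -scaleN1r mx2_scale mx2_add; congr mx2; ring.
Qed.

Lemma qmxK_small (n : int) : exists k, forall e1 e2 e3 e4 : K,
  vge k e1 -> vge k e2 -> vge k e3 -> vge k e4 -> mvge n (qmxK e1 e2 e3 e4).
Proof.
have [c1 [c1le hc1]] := vge_exists s 0.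
have [c2 [c2le hc2]] := vge_exists (iota beta) c1.
have hc1' : vge c2 s by apply: vge_le hc1.
exists (n - c2 - c2) => e1 e2 e3 e4 h1 h2 h3 h4.
have weak e : vge (n - c2 - c2) e -> vge n e by apply: vge_le; lia.
have weak_s e : vge (n - c2 - c2) e -> vge n (e * s).
  by move=> he; apply: vge_le (vgeM he hc1'); lia.
apply/mvge_mx2; split.
- by apply: vgeD; [apply: weak | apply: weak_s].
- have h3' : vge (n - c2 - c2 + c2) e3 by apply: vge_le h3; lia.
  by apply: vge_le (vgeM hc2 (vgeD h3' (vgeM h4 hc1'))); lia.
- by apply: vgeB; [apply: weak | apply: weak_s].
- by apply: vgeB; [apply: weak | apply: weak_s].
Qed.

Lemma qmx_rat_approx (y : 'M[K]_2) (n : int) :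
  exists x : quat, mvge n (qmx iota alpha beta s x - y).
Proof.
have [z1 [z2 [z3 [z4 ->]]]] := qmxK_onto y.
have [k hN] := qmxK_small n.
have [q1 /close_vge h1] := rat_dense z1 k; have [q2 /close_vge h2] := rat_dense z2 k.
have [q3 /close_vge h3] := rat_dense z3 k; have [q4 /close_vge h4] := rat_dense z4 k.
exists (q1, q2, q3, q4).
have -> : qmx iota alpha beta s (q1, q2, q3, q4) = qmxK (iota q1) (iota q2) (iota q3) (iota q4).
  by [].
by rewrite qmxK_sub; apply: hN.
Qed.

Lemma norm1_approx g n0 : \det g = 1 -> 2 + g 0 0 + g 1 1 != 0 ->
  exists x : quat, qnorm alpha beta x = 1 /\
    exists E0 : 'M[K]_2, mvge n0 E0 /\ qmx iota alpha beta s x = g *m (1 + E0).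
Proof.
move=> detg ht; set y := mx2 (1 + g 0 0) (g 0 1) (g 1 0) (1 + g 1 1).
have hdet : g 0 0 * g 1 1 - g 0 1 * g 1 0 = 1 by rewrite -mx2_det -mx2E.
have yy : y *m y = (2 + g 0 0 + g 1 1) *: g by rewrite mx2_CayleyHamilton // -mx2E.
have dety : \det y = 2 + g 0 0 + g 1 1.
  transitivity (1 + g 0 0 + g 1 1 + (g 0 0 * g 1 1 - g 0 1 * g 1 0)).
    by rewrite mx2_det; ring.
  by rewrite hdet; ring.
have [M hM] := sqr_over_det_near n0 detg yy dety ht.
have [x hx] := qmx_rat_approx y M.
have [dY0 [E0 [hE0 hX]]] := hM _ hx.
have eY : y + (qmx iota alpha beta s x - y) = qmx iota alpha beta s x by rewrite addrC subrK.
rewrite eY in dY0 hX.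
set nq := qnorm alpha beta x.
have inq : iota nq = \det (qmx iota alpha beta s x) by rewrite (qmx_det beta s_sqr).
have nq0 : nq != 0 by rewrite -(fmorph_eq0 iota) inq.
exists (qscale nq^-1 (qmul alpha beta x x)); split.
  by rewrite qnorm_scale_sqr mulVf // expr1n.
exists E0; split => //.
by rewrite qmx_scale (qmx_mul beta s_sqr) fmorphV inq.
Qed.

Lemma norm1_approx_sign h n0 : \det h = 1 -> exists x : quat, qnorm alpha beta x = 1 /\
  exists E0 : 'M[K]_2, mvge n0 E0 /\
    (qmx iota alpha beta s x = h *m (1 + E0) \/ qmx iota alpha beta s x = (- h) *m (1 + E0)).
Proof.
move=> dh.
case: (eqVneq (2 + h 0 0 + h 1 1) 0) => [e|ne]; last first.
  have [x [nx [E0 [hE hx]]]] := norm1_approx n0 dh ne.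
  by exists x; split => //; exists E0; split => //; left.
have dh' : \det (- h) = 1 by rewrite -scaleN1r detZ expr2 mulrNN !mul1r dh.
have ne : 2 + (- h) 0 0 + (- h) 1 1 != 0.
  rewrite !mxE.
  have -> : 2 - h 0 0 - h 1 1 = 4 - (2 + h 0 0 + h 1 1) by ring.
  rewrite e subr0 -(rmorph_nat iota) fmorph_eq0 //.
have [x [nx [E0 [hE hx]]]] := norm1_approx n0 dh' ne.
by exists x; split => //; exists E0; split => //; right.
Qed.

Lemma norm1_weyl_transitive : weyl_transitive p iota v alpha beta s.
Proof.
move=> w C1 C1' C2 C2' hC1 hC1' hC2 _ hw1 hw2.
have [h [dh [hh1 hh2]]] := SL2_weyl_transitive hC1 hC2 hw1 hw2.
have [n1 s1] := chamber_stab_open hC1.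
have [n2 s2] := chamber_stab_open hC1'.
have [x [nx [E0 [hE hx]]]] := norm1_approx_sign (Num.max n1 n2) dh.
have dE : \det (1 + E0) = 1.
  have : \det (qmx iota alpha beta s x) = 1 by rewrite (qmx_det beta s_sqr) nx rmorph1.
  case: hx => ->; rewrite det_mulmx ?dh ?mul1r //.
  by rewrite -scaleN1r detZ expr2 mulrNN !mul1r dh mul1r.
have near C n : (forall (E0 g : 'M[K]_2), mvge n E0 -> \det (1 + E0) = 1 ->
    ceq (cact (g *m (1 + E0)) C) (cact g C)) -> n <= Num.max n1 n2 ->
    ceq (cact (qmx iota alpha beta s x) C) (cact h C).
  move=> sC nle; have hE' : mvge n E0 by apply: mvge_le hE.
  case: hx => ->; first exact: sC.
  exact: ceq_trans (sC _ _ hE' dE) (cact_opp _ _).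
exists x; split => //; split.
  by apply: ceq_trans hh1; apply: near s1 _; rewrite le_max lexx.
by apply: ceq_trans hh2; apply: near s2 _; rewrite le_max lexx orbT.
Qed.

End Approximation.

End DiscreteValuation.

Lemma vp_prime p : prime p -> vp p p%:R = 1.
Proof.
move=> p_prime; rewrite /vp -[p%:R]/((p%:Z)%:~R) numq_int denq_int /= logn1.
by rewrite logn_prime // eqxx subr0.
Qed.

Theorem proposition3 (alpha beta : rat) (p : nat)
  (K : fieldType) (iota : {rmorphism rat -> K}) (v : K -> int) (s : K) :
  alpha != 0 -> beta != 0 ->
  is_division_algebra alpha beta ->
  prime p -> p != 2%N ->
  vp p alpha = 0 -> vp p beta = 0 ->
  is_Qp p iota v ->
  s * s = iota alpha ->
  weyl_transitive p iota v alpha beta s.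
Proof.
move=> alpha0 beta0 _ p_prime _ _ _ [v_mul v_min v_iota rat_dense _] Hs.
have p_neq0 : (p%:R : rat) != 0 by rewrite pnatr_eq0 -lt0n prime_gt0.
apply: (norm1_weyl_transitive v_mul v_min _ _ rat_dense Hs alpha0 beta0).
- by rewrite -(rmorph_nat iota) fmorph_eq0.
- by rewrite -(rmorph_nat iota) v_iota // vp_prime.
Qed.
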